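(* Let $h:[0,1]\to(0,\infty)$ and $f:[0,\infty)\to[0,\infty)$ be continuously differentiable, suppose there is $t_0\ge 0$ with $f(t)>0$ for all $t\ge t_0$ and $f\in C^2([t_0,\infty))$, and put $g(t)=\log f(t)$ for $t\ge t_0$. Assume condition (H1) stated in the context. Let $(\lambda_n,\mu_n,u_n)\in(0,\infty)\times(0,\infty)\times C^2([0,1])$, $n\in\mathbb{N}$, satisfy $$-u_n''-\tfrac1r u_n'=\lambda_n h(r) f(u_n),\quad u_n>0 \text{ in }(0,1),\qquad u_n(0)=\mu_n,\ u_n'(0)=0=u_n(1),$$ and suppose $\mu_n\to\infty$. For each large $n$ define $\gamma_{0,n}>0$ by $\lambda_n h(0) f'(\mu_n)\gamma_{0,n}^2=1$ and $z_{0,n}(r)=g'(\mu_n)(u_n(\gamma_{0,n}r)-\mu_n)$ for $r\in[0,1/\gamma_{0,n}]$. Let $z_0(r)=\log\frac{64}{(8+r^2)^2}$ for $r\ge0$. Then $\gamma_{0,n}\to0$ as $n\to\infty$, and, up to a subsequence, there exists a sequence $(\rho_{0,n})\subset(0,1)$ such that $u_n(\rho_{0,n})/\mu_n\to1$, $\rho_{0,n}\to0$, $\rho_{0,n}/\gamma_{0,n}\to\infty$, $\|z_{0,n}-z_0\|_{C^2([0,\rho_{0,n}/\gamma_{0,n}])}\to0$ as $n\to\infty$, and $$\lim_{n\to\infty} g'(\mu_n)\int_0^{\rho_{0,n}}\lambda_n h f(u_n)\,r\,dr=4=\lim_{n\to\infty}\int_0^{\rho_{0,n}}\lambda_n h 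f'(u_n)\,r\,dr.$$
   Context: Condition (H1): (i) $g'(t)>0$ and $g''(t)>0$ for all $t\ge t_0$, and there is a pair $(q,p)$ with either $q=1$ and $p\in(0,\infty]$, or $q\in(1,\infty)$ and $p\in(0,\infty)$, such that $\lim_{t\to\infty}\frac{g'(t)^2}{g(t)g''(t)}=q$ and $\lim_{t\to\infty}\frac{tg'(t)}{g(t)}=p$; (ii) if $q=1$, then $tg'(t)/g(t)$ is nondecreasing on $[t_0,\infty)$ and there exist $k\in\mathbb{N}$ and $\hat g\in C^2([t_0,\infty))$ with $f(t)=\exp_k(\hat g(t))$ and $\hat g'(t)/\hat g(t)$ nonincreasing for all $t\ge t_0$, where $\exp_1=\exp$ and $\exp_k(t)=\exp_{k-1}(\exp(t))$. In integrals, $h$ and $f(u_n)$ are evaluated at $r$, i.e. $h=h(r)$, $f(u_n)=f(u_n(r))$. *)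

From Stdlib Require Import Reals Lra.
From Coquelicot Require Import Coquelicot.
Open Scope R_scope.

(* [df] is the derivative of [f] on the set [D], taken within [D]
   (so one-sided derivatives at endpoints of closed intervals). *)
Definition deriv_within (D : R -> Prop) (f df : R -> R) : Prop :=
  forall x, D x ->
    filterlim (fun y => (f y - f x) / (y - x))
      (within (fun y => D y /\ y <> x) (locally x)) (locally (df x)).

Definition cont_within (D : R -> Prop) (f : R -> R) : Prop :=
  forall x, D x -> filterlim f (within D (locally x)) (locally (f x)).

Definition C1_on (D : R -> Prop) (f df : R -> R) : Prop :=
  cont_within D f /\ deriv_within D f df /\ cont_within D df.

Definition C2_on (D : R -> Prop) (f df d2f : R -> R) : Prop :=
  C1_on D f df /\ C1_on D df d2f.

Definition Icc (a b : R) : R -> Prop := fun x => a <= x <= b.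
Definition Ici (a : R) : R -> Prop := fun x => a <= x.

Fixpoint exp_k (k : nat) (t : R) : R :=
  match k with
  | O => t
  | S k' => exp_k k' (exp t)
  end.

Definition z0 (r : R) : R := ln (64 / (8 + r ^ 2) ^ 2).

Definition H1 (t0 : R) (f g dg d2g : R -> R) : Prop :=
  (forall t, t0 <= t -> 0 < dg t /\ 0 < d2g t) /\
  exists (q : R) (p : Rbar),
    ((q = 1 /\ Rbar_lt 0 p) \/ (1 < q /\ Rbar_lt 0 p /\ is_finite p)) /\
    is_lim (fun t => dg t ^ 2 / (g t * d2g t)) p_infty q /\
    is_lim (fun t => t * dg t / g t) p_infty p /\
    (q = 1 ->
       (forall s t, t0 <= s -> s <= t -> s * dg s / g s <= t * dg t / g t) /\
       exists (k : nat) (gh dgh d2gh : R -> R),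
         (1 <= k)%nat /\ C2_on (Ici t0) gh dgh d2gh /\
         (forall t, t0 <= t -> f t = exp_k k (gh t)) /\
         (forall s t, t0 <= s -> s <= t -> dgh t / gh t <= dgh s / gh s)).

(* After the rescaling [r = gam s] with [lam h(0) f'(mu) gam^2 = 1], the error
   [w(s) = g'(mu) (u(gam s) - mu) - z0(s)] satisfies [w(0) = w'(0) = 0] and a
   perturbed Liouville equation [w'' + w' / s = O(|w| + theta)], where [theta]
   measures how far [h(gam s) / h(0)] is from 1 and [f(u) / f(mu)] from
   [exp (g'(mu) (u - mu))].  The latter is uniformly small because
   [g'' = o(g'^2)], which (H1) yields through [g'^2 / (g g'') -> q > 0] and
   [g -> oo].  A Gronwall argument with the weight [exp (-2 s)] bounds [w] in
   [C^2([0, R])], and [gam -> 0] because [mu <= lam (sup h) f(mu) / 2] makes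
   [lam f'(mu)] grow at least like [g'(mu) mu].  Choosing [R = k + 1] and
   accuracy [1 / (k + 1)] along a diagonal subsequence gives
   [rho = gam (k + 1)]; the two integrals then follow from the flux identity
   [int_0^rho lam h f(u) r dr = - rho u'(rho)] with [- s z0'(s) -> 4], and from
   [f' = g' f] with [g'(u) ~ g'(mu)] on [[0, rho]]. *)

From Stdlib Require Import Reals Lra Lia IndefiniteDescription.
From Coquelicot Require Import Coquelicot.
Open Scope R_scope.

(** * Continuity on a compact interval *)

Definition clamp (a b x : R) : R := Rmax a (Rmin b x).

(* Continuity of [f] on [[a, b]] is encoded as continuity on all of [R] of the
   extension [f \o clamp a b], which is constant outside [[a, b]]. *)
Definition cont_Icc (a b : R) (f : R -> R) : Prop :=
  forall x, continuity_pt (fun y => f (clamp a b y)) x.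

Lemma clamp_in_Icc a b x : a <= b -> a <= clamp a b x <= b.
Proof. intros; unfold clamp, Rmax, Rmin; repeat destruct Rle_dec; lra. Qed.

Lemma clamp_id a b x : a <= x <= b -> clamp a b x = x.
Proof. intros; unfold clamp, Rmax, Rmin; repeat destruct Rle_dec; lra. Qed.

Lemma clamp_lipschitz a b x y :
  a <= b -> Rabs (clamp a b y - clamp a b x) <= Rabs (y - x).
Proof.
  intros. unfold clamp, Rmax, Rmin. apply Rabs_le.
  unfold Rabs; destruct Rcase_abs; repeat destruct Rle_dec; lra.
Qed.

Lemma continuity_pt_eps (f : R -> R) x :
  continuity_pt f x <->
  forall eps, 0 < eps -> exists d, 0 < d /\
    forall y, Rabs (y - x) < d -> Rabs (f y - f x) < eps.
Proof.
  rewrite continuity_pt_locally. split.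
  - intros H eps He. destruct (H (mkposreal eps He)) as [d Hd].
    exists d. split; [apply cond_pos | intros y Hy; apply Hd, Hy].
  - intros H eps. destruct (H eps (cond_pos eps)) as [d [Hd Hy]].
    exists (mkposreal d Hd). intros y Hb. apply Hy, Hb.
Qed.

Lemma filterlim_within_eps (D : R -> Prop) (F : R -> R) x l :
  filterlim F (within D (locally x)) (locally l) ->
  forall eps, 0 < eps -> exists d, 0 < d /\
    forall y, D y -> Rabs (y - x) < d -> Rabs (F y - l) < eps.
Proof.
  intros H eps He. apply filterlim_locally with (eps := mkposreal eps He) in H.
  destruct H as [d Hd]. exists d. split; [apply cond_pos |].
  intros y HD Hy. apply (Hd y Hy HD).
Qed.

Lemma clamp_continuous a b x : a <= b -> continuity_pt (clamp a b) x.
Proof.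
  intro Hab. apply continuity_pt_eps. intros eps He. exists eps. split; auto.
  intros y Hy. eapply Rle_lt_trans; [apply clamp_lipschitz|]; auto.
Qed.

Lemma cont_Icc_of_cont_within (D : R -> Prop) a b f :
  a <= b -> (forall x, a <= x <= b -> D x) -> cont_within D f -> cont_Icc a b f.
Proof.
  intros Hab HD H x. apply continuity_pt_eps. intros eps He.
  destruct (filterlim_within_eps D f _ _ (H _ (HD _ (clamp_in_Icc a b x Hab))) eps He)
    as [d [Hd Hy]].
  exists d. split; auto. intros y Hxy. apply Hy; [apply HD, clamp_in_Icc; auto|].
  eapply Rle_lt_trans; [apply clamp_lipschitz|]; auto.
Qed.

Lemma cont_Icc_of_Icc a b f : a <= b -> cont_within (Icc a b) f -> cont_Icc a b f.
Proof. intros Hab. apply cont_Icc_of_cont_within; auto. Qed.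

Lemma cont_Icc_of_Ici c a b f :
  c <= a -> a <= b -> cont_within (Ici c) f -> cont_Icc a b f.
Proof. intros Hc Hab. apply cont_Icc_of_cont_within; auto. intros x Hx; red; lra. Qed.

Lemma cont_Icc_of_continuity a b f :
  a <= b -> (forall x, continuity_pt f x) -> cont_Icc a b f.
Proof. intros Hab H x. apply continuity_pt_comp; [apply clamp_continuous; auto | apply H]. Qed.

Lemma cont_Icc_comp a b c d (phi psi : R -> R) :
  a <= b -> c <= d -> cont_Icc a b phi -> cont_Icc c d psi ->
  (forall x, a <= x <= b -> c <= phi x <= d) -> cont_Icc a b (fun x => psi (phi x)).
Proof.
  intros Hab Hcd Hphi Hpsi Hrange x.
  apply continuity_pt_ext with (f := fun y => psi (clamp c d (phi (clamp a b y)))).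
  - intro y. rewrite clamp_id; auto. apply Hrange, clamp_in_Icc; auto.
  - apply (continuity_pt_comp (fun y => phi (clamp a b y)) (fun z => psi (clamp c d z))); auto.
Qed.

Lemma cont_Icc_id a b : a <= b -> cont_Icc a b (fun x => x).
Proof. intros Hab x. apply clamp_continuous; auto. Qed.

Lemma cont_Icc_subinterval a b a' b' f :
  a <= a' -> a' <= b' -> b' <= b -> cont_Icc a b f -> cont_Icc a' b' f.
Proof.
  intros. apply (cont_Icc_comp a' b' a b (fun x => x)); auto; try lra.
  - apply cont_Icc_id; lra.
  - intros; lra.
Qed.

Lemma cont_Icc_const a b c : cont_Icc a b (fun _ => c).
Proof. intros x. apply continuity_pt_const. intros ? ?; reflexivity. Qed.

Lemma cont_Icc_plus a b f g :
  cont_Icc a b f -> cont_Icc a b g -> cont_Icc a b (fun x => f x + g x).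
Proof. intros Hf Hg x. exact (continuity_pt_plus _ _ x (Hf x) (Hg x)). Qed.

Lemma cont_Icc_mult a b f g :
  cont_Icc a b f -> cont_Icc a b g -> cont_Icc a b (fun x => f x * g x).
Proof. intros Hf Hg x. exact (continuity_pt_mult _ _ x (Hf x) (Hg x)). Qed.

Lemma cont_Icc_opp a b f : cont_Icc a b f -> cont_Icc a b (fun x => - f x).
Proof. intros Hf x. exact (continuity_pt_opp _ x (Hf x)). Qed.

Lemma cont_Icc_minus a b f g :
  cont_Icc a b f -> cont_Icc a b g -> cont_Icc a b (fun x => f x - g x).
Proof. intros Hf Hg x. exact (continuity_pt_minus _ _ x (Hf x) (Hg x)). Qed.

Lemma cont_Icc_abs a b f : cont_Icc a b f -> cont_Icc a b (fun x => Rabs (f x)).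
Proof.
  intros Hf x. apply (continuity_pt_comp (fun y => f (clamp a b y)) Rabs x); auto.
  apply Rcontinuity_abs.
Qed.

Lemma cont_Icc_inv a b f :
  a <= b -> cont_Icc a b f -> (forall x, a <= x <= b -> f x <> 0) ->
  cont_Icc a b (fun x => / f x).
Proof. intros Hab Hf Hn x. exact (continuity_pt_inv _ x (Hf x) (Hn _ (clamp_in_Icc a b x Hab))). Qed.

Lemma cont_Icc_rescale (phi : R -> R) c R0 :
  0 < c -> 0 <= R0 -> c * R0 <= 1 -> cont_Icc 0 1 phi -> cont_Icc 0 R0 (fun s => phi (c * s)).
Proof.
  intros Hc HR0 HR H. apply (cont_Icc_comp 0 R0 0 1); auto; try lra.
  - apply cont_Icc_mult; [apply cont_Icc_const | apply cont_Icc_id; auto].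
  - intros; split; nra.
Qed.

Lemma continuity_pt_of_ex_derive (f : R -> R) x : ex_derive f x -> continuity_pt f x.
Proof. intro H. apply continuity_pt_filterlim. apply (ex_derive_continuous f x H). Qed.

(** * Comparison of increments *)

Lemma nonincreasing_of_derive_nonpos (phi dphi : R -> R) a b :
  a <= b -> cont_Icc a b phi ->
  (forall x, a < x < b -> is_derive phi x (dphi x)) ->
  (forall x, a < x < b -> dphi x <= 0) -> phi b <= phi a.
Proof.
  intros Hab Hc Hd Hn.
  destruct (MVT_gen (fun y => phi (clamp a b y)) a b (fun x => Rmin 0 (dphi x)))
    as [c [_ Hc2]].
  - rewrite Rmin_left, Rmax_right by lra. intros x Hx.
    replace (Rmin 0 (dphi x)) with (dphi x)
      by (specialize (Hn x Hx); unfold Rmin; destruct Rle_dec; lra).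
    apply is_derive_ext_loc with (f := phi); auto.
    assert (Hp : 0 < Rmin (x - a) (b - x)) by (apply Rmin_pos; lra).
    exists (mkposreal _ Hp). intros y Hy. rewrite clamp_id; auto.
    pose proof (Rmin_l (x - a) (b - x)). pose proof (Rmin_r (x - a) (b - x)).
    change (Rabs (y - x) < Rmin (x - a) (b - x)) in Hy.
    apply Rabs_lt_between in Hy. lra.
  - intros x _. apply Hc.
  - rewrite !clamp_id in Hc2 by lra.
    pose proof (Rmin_l 0 (dphi c)). nra.
Qed.

Lemma increment_le_of_derive_le (phi dphi psi dpsi : R -> R) a b :
  a <= b -> cont_Icc a b phi -> cont_Icc a b psi ->
  (forall x, a < x < b -> is_derive phi x (dphi x)) ->
  (forall x, a < x < b -> is_derive psi x (dpsi x)) ->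
  (forall x, a < x < b -> dphi x <= dpsi x) ->
  phi b - phi a <= psi b - psi a.
Proof.
  intros Hab Hphi Hpsi Dphi Dpsi Hle.
  enough ((fun x => phi x - psi x) b <= (fun x => phi x - psi x) a) by (simpl in *; lra).
  apply (nonincreasing_of_derive_nonpos (fun x => phi x - psi x) (fun x => dphi x - dpsi x)); auto.
  - apply cont_Icc_minus; auto.
  - intros x Hx. apply (is_derive_minus phi psi); auto.
  - intros x Hx. specialize (Hle x Hx). lra.
Qed.

Lemma increment_abs_le_of_derive_abs_le (phi dphi psi dpsi : R -> R) a b :
  a <= b -> cont_Icc a b phi -> cont_Icc a b psi ->
  (forall x, a < x < b -> is_derive phi x (dphi x)) ->
  (forall x, a < x < b -> is_derive psi x (dpsi x)) ->
  (forall x, a < x < b -> Rabs (dphi x) <= dpsi x) ->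
  Rabs (phi b - phi a) <= psi b - psi a.
Proof.
  intros Hab Hphi Hpsi Dphi Dpsi Hle. apply Rabs_le. split.
  - enough ((fun x => - phi x) b - (fun x => - phi x) a <= psi b - psi a)
      by (simpl in *; lra).
    apply (increment_le_of_derive_le (fun x => - phi x) (fun x => - dphi x) psi dpsi); auto.
    + apply cont_Icc_opp; auto.
    + intros x Hx. apply (is_derive_opp phi); auto.
    + intros x Hx. specialize (Hle x Hx). apply Rabs_le_between in Hle; lra.
  - apply (increment_le_of_derive_le phi dphi psi dpsi); auto.
    intros x Hx. specialize (Hle x Hx). apply Rabs_le_between in Hle; lra.
Qed.

Lemma is_derive_of_deriv_within_interior (D : R -> Prop) phi dphi x d :
  deriv_within D phi dphi -> D x -> 0 < d ->
  (forall y, Rabs (y - x) < d -> D y) -> is_derive phi x (dphi x).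
Proof.
  intros H Dx Hd0 HD. apply is_derive_Reals. intros eps He.
  destruct (filterlim_within_eps _ _ _ _ (H x Dx) eps He) as [d' [Hd' Hy]].
  assert (Hp : 0 < Rmin d' d) by (apply Rmin_pos; auto).
  exists (mkposreal _ Hp). intros k Hk0 Hkd. simpl in Hkd.
  pose proof (Rmin_l d' d). pose proof (Rmin_r d' d).
  specialize (Hy (x + k)). replace (x + k - x) with k in Hy by ring.
  apply Hy; [split; [apply HD; replace (x + k - x) with k by ring|] |]; lra.
Qed.

Lemma is_derive_of_deriv_within_Ici a phi dphi x :
  deriv_within (Ici a) phi dphi -> a < x -> is_derive phi x (dphi x).
Proof.
  intros H Hx. apply (is_derive_of_deriv_within_interior (Ici a) _ _ _ (x - a)); auto.
  - red; lra.
  - lra.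
  - intros y Hy. apply Rabs_lt_between in Hy. red; lra.
Qed.

Lemma is_derive_of_deriv_within_Icc a b phi dphi x :
  deriv_within (Icc a b) phi dphi -> a < x < b -> is_derive phi x (dphi x).
Proof.
  intros H Hx.
  apply (is_derive_of_deriv_within_interior (Icc a b) _ _ _ (Rmin (x - a) (b - x))); auto.
  - red; lra.
  - apply Rmin_pos; lra.
  - intros y Hy. pose proof (Rmin_l (x - a) (b - x)). pose proof (Rmin_r (x - a) (b - x)).
    apply Rabs_lt_between in Hy. red; lra.
Qed.

Lemma nondecreasing_of_derive_nonneg (phi dphi : R -> R) a b :
  a <= b -> cont_Icc a b phi ->
  (forall x, a < x < b -> is_derive phi x (dphi x)) ->
  (forall x, a < x < b -> 0 <= dphi x) -> phi a <= phi b.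
Proof.
  intros Hab Hc Hd Hn.
  enough ((fun x => - phi x) b <= (fun x => - phi x) a) by (simpl in *; lra).
  apply (nonincreasing_of_derive_nonpos (fun x => - phi x) (fun x => - dphi x)); auto.
  - apply cont_Icc_opp; auto.
  - intros x Hx. apply (is_derive_opp phi); auto.
  - intros x Hx. specialize (Hn x Hx). lra.
Qed.

Lemma increment_between_of_derive_between (phi dphi : R -> R) a b lo hi :
  a <= b -> cont_Icc a b phi ->
  (forall x, a < x < b -> is_derive phi x (dphi x)) ->
  (forall x, a < x < b -> lo <= dphi x <= hi) ->
  lo * (b - a) <= phi b - phi a <= hi * (b - a).
Proof.
  intros Hab Hc Hd Hb.
  assert (Hlin : forall c, cont_Icc a b (fun x => c * x)).
  { intro c. apply cont_Icc_mult; [apply cont_Icc_const | apply cont_Icc_id; auto]. }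
  assert (Dlin : forall c x, is_derive (fun x => c * x) x c).
  { intros c x. pose proof (is_derive_scal (fun y => y) x c 1 (is_derive_id x)) as H.
    rewrite Rmult_1_r in H. exact H. }
  split.
  - pose proof (increment_le_of_derive_le (fun x => lo * x) (fun _ => lo) phi dphi a b
      Hab (Hlin lo) Hc (fun x _ => Dlin lo x) Hd (fun x Hx => proj1 (Hb x Hx))). lra.
  - pose proof (increment_le_of_derive_le phi dphi (fun x => hi * x) (fun _ => hi) a b
      Hab Hc (Hlin hi) Hd (fun x _ => Dlin hi x) (fun x Hx => proj2 (Hb x Hx))). lra.
Qed.

(** * A singular Gronwall estimate *)

Definition gronwall_const (R0 : R) : R := (2 * R0 + R0 * R0) * exp (2 * R0).

Lemma gronwall_const_nonneg R0 : 0 <= R0 -> 0 <= gronwall_const R0.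
Proof. intro. unfold gronwall_const. pose proof (exp_pos (2 * R0)). nra. Qed.

Lemma exp_ge_1 x : 0 <= x -> 1 <= exp x.
Proof.
  intro Hx. rewrite <- exp_0. destruct (Req_dec x 0) as [->|]; [lra|].
  left; apply exp_increasing; lra.
Qed.

Lemma exp_le_exp_of_le a b : a <= b -> exp a <= exp b.
Proof. intro H. destruct (Req_dec a b) as [->|]; [lra | left; apply exp_increasing; lra]. Qed.

Section RadialGronwall.

Variables (R0 : R) (w w1 w2 : R -> R).
Hypothesis HR0 : 0 < R0.
Hypothesis Hw_cont : cont_Icc 0 R0 w.
Hypothesis Hw1_cont : cont_Icc 0 R0 w1.
Hypothesis Hw_0 : w 0 = 0.
Hypothesis Hw1_0 : w1 0 = 0.
Hypothesis Hw_derive : forall s, 0 < s < R0 -> is_derive w s (w1 s).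
Hypothesis Hw1_derive : forall s, 0 < s < R0 -> is_derive w1 s (w2 s).

(* [w2 + w1 / s] is the radial Laplacian [(s w1)' / s]. *)
Lemma radial_derivative_bound a b :
  0 <= a -> 0 <= b ->
  (forall s, 0 < s < R0 -> Rabs (w2 s + w1 s / s) <= a * exp (2 * s) + b) ->
  forall s, 0 <= s <= R0 -> Rabs (w1 s) <= a * exp (2 * s) / 2 + b * s / 2.
Proof.
  intros Ha Hb Hres s Hs.
  destruct (Req_dec s 0) as [->|Hs0].
  { rewrite Hw1_0, Rabs_R0. pose proof (exp_pos (2 * 0)). nra. }
  set (Psi := fun t => a * ((t / 2 - 1 / 4) * exp (2 * t) + 1 / 4) + b * (t * t) / 2).
  assert (Hflux : Rabs (s * w1 s - 0 * w1 0) <= Psi s - Psi 0).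
  { apply (increment_abs_le_of_derive_abs_le (fun t => t * w1 t)
      (fun t => 1 * w1 t + t * w2 t) Psi (fun t => a * t * exp (2 * t) + b * t)).
    - lra.
    - apply cont_Icc_mult; [apply cont_Icc_id; lra|].
      apply (cont_Icc_subinterval 0 R0); auto; lra.
    - apply cont_Icc_of_continuity; [lra|]. intro x.
      apply continuity_pt_of_ex_derive. unfold Psi. auto_derive; auto.
    - intros x Hx. apply Derive.is_derive_mult; [apply (is_derive_id (K := R_AbsRing)) | apply Hw1_derive; lra].
    - intros x Hx. unfold Psi. auto_derive; auto. field.
    - intros x Hx.
      replace (1 * w1 x + x * w2 x) with (x * (w2 x + w1 x / x)) by (field; lra).
      replace (a * x * exp (2 * x) + b * x) with (x * (a * exp (2 * x) + b)) by ring.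
      rewrite Rabs_mult, Rabs_pos_eq by lra.
      apply Rmult_le_compat_l; [lra | apply Hres; lra]. }
  rewrite Rmult_0_l, Rminus_0_r, Rabs_mult, Rabs_pos_eq in Hflux by lra.
  assert (HPsi : Psi s - Psi 0 <= s * (a * exp (2 * s) / 2 + b * s / 2)).
  { unfold Psi. replace (2 * 0) with 0 by ring. rewrite exp_0.
    pose proof (exp_ge_1 (2 * s) ltac:(lra)). nra. }
  apply Rmult_le_reg_l with s; lra.
Qed.

Lemma radial_value_bound a b :
  0 <= a -> 0 <= b ->
  (forall s, 0 <= s <= R0 -> Rabs (w1 s) <= a * exp (2 * s) / 2 + b * s / 2) ->
  forall s, 0 <= s <= R0 -> Rabs (w s) <= a * (exp (2 * s) - 1) / 4 + b * (s * s) / 4.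
Proof.
  intros Ha Hb Hw1 s Hs.
  set (Psi := fun t => a * exp (2 * t) / 4 + b * (t * t) / 4).
  replace (w s) with (w s - w 0) by (rewrite Hw_0; ring).
  replace (a * (exp (2 * s) - 1) / 4 + b * (s * s) / 4) with (Psi s - Psi 0)
    by (unfold Psi; replace (2 * 0) with 0 by ring; rewrite exp_0; field).
  apply (increment_abs_le_of_derive_abs_le w w1 Psi
    (fun t => a * exp (2 * t) / 2 + b * t / 2)); try lra.
  - apply (cont_Icc_subinterval 0 R0); auto; lra.
  - apply cont_Icc_of_continuity; [lra|]. intro x.
    apply continuity_pt_of_ex_derive. unfold Psi. auto_derive; auto.
  - intros x Hx. apply Hw_derive; lra.
  - intros x Hx. unfold Psi. auto_derive; auto. field.
  - intros x Hx. apply Hw1; lra.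
Qed.

(* The weight [exp (-2 s)] absorbs the linear growth: with
   [K = max (|w| + |w1|) exp (-2 s)], the two bounds above give
   [K (exp (2 s) + 1) <= eta (2 s + s^2)] at the maximiser. *)
Lemma radial_gronwall eta :
  0 <= eta ->
  (forall s, 0 < s < R0 -> Rabs (w2 s + w1 s / s) <= Rabs (w s) + eta) ->
  forall s, 0 <= s <= R0 -> Rabs (w s) + Rabs (w1 s) <= gronwall_const R0 * eta.
Proof.
  intros Heta Hres.
  set (M := fun y => (Rabs (w (clamp 0 R0 y)) + Rabs (w1 (clamp 0 R0 y))) * exp (- (2 * y))).
  destruct (continuity_ab_maj M 0 R0) as [ss [HM Hss]]; [lra| |].
  { intros c _. apply (continuity_pt_mult
      (fun y => Rabs (w (clamp 0 R0 y)) + Rabs (w1 (clamp 0 R0 y))) (fun y => exp (- (2 * y)))).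
    - apply (cont_Icc_plus 0 R0 (fun x => Rabs (w x)) (fun x => Rabs (w1 x)));
        apply cont_Icc_abs; auto.
    - apply continuity_pt_of_ex_derive. auto_derive; auto. }
  set (K := M ss).
  assert (Hexp : forall s, exp (- (2 * s)) * exp (2 * s) = 1).
  { intro s. rewrite <- exp_plus. replace (- (2 * s) + 2 * s) with 0 by ring. apply exp_0. }
  assert (HK0 : 0 <= K).
  { unfold K, M. pose proof (Rabs_pos (w (clamp 0 R0 ss))).
    pose proof (Rabs_pos (w1 (clamp 0 R0 ss))). pose proof (exp_pos (- (2 * ss))). nra. }
  assert (HK : forall s, 0 <= s <= R0 -> Rabs (w s) + Rabs (w1 s) <= K * exp (2 * s)).
  { intros s Hs. specialize (HM s Hs). change (M s <= K) in HM. unfold M in HM.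
    rewrite clamp_id in HM by lra. pose proof (Hexp s). pose proof (exp_pos (2 * s)).
    replace (Rabs (w s) + Rabs (w1 s))
      with ((Rabs (w s) + Rabs (w1 s)) * exp (- (2 * s)) * exp (2 * s))
      by (rewrite Rmult_assoc, Hexp; ring).
    apply Rmult_le_compat_r; lra. }
  assert (HKss : Rabs (w ss) + Rabs (w1 ss) = K * exp (2 * ss)).
  { unfold K, M. rewrite clamp_id by lra. rewrite Rmult_assoc, Hexp. ring. }
  assert (Hw1b := radial_derivative_bound K eta HK0 Heta
    ltac:(intros s Hs; specialize (Hres s Hs); specialize (HK s ltac:(lra));
          pose proof (Rabs_pos (w1 s)); lra)).
  assert (Hwb := radial_value_bound K eta HK0 Heta Hw1b).
  assert (HKbound : K <= eta * (2 * R0 + R0 * R0)).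
  { specialize (Hw1b ss Hss). specialize (Hwb ss Hss).
    assert (K * (exp (2 * ss) + 1) <= eta * (2 * ss + ss * ss)) by lra.
    assert (eta * (2 * ss + ss * ss) <= eta * (2 * R0 + R0 * R0))
      by (apply Rmult_le_compat_l; nra).
    pose proof (exp_pos (2 * ss)). nra. }
  intros s Hs. eapply Rle_trans; [apply HK; auto|]. unfold gronwall_const.
  pose proof (exp_le_exp_of_le (2 * s) (2 * R0) ltac:(lra)). pose proof (exp_pos (2 * s)).
  nra.
Qed.

Lemma radial_gronwall_second_derivative eta :
  0 <= eta ->
  (forall s, 0 < s < R0 -> Rabs (w2 s + w1 s / s) <= Rabs (w s) + eta) ->
  forall s, 0 < s < R0 -> Rabs (w2 s) <= 2 * (gronwall_const R0 + 1) * eta.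
Proof.
  intros Heta Hres s Hs.
  set (b := (gronwall_const R0 + 1) * eta).
  assert (HB := gronwall_const_nonneg R0 ltac:(lra)).
  assert (Hresb : forall s, 0 < s < R0 -> Rabs (w2 s + w1 s / s) <= 0 * exp (2 * s) + b).
  { intros x Hx. pose proof (radial_gronwall eta Heta Hres x ltac:(lra)).
    pose proof (Rabs_pos (w1 x)). specialize (Hres x Hx). unfold b. nra. }
  pose proof (radial_derivative_bound 0 b ltac:(lra) ltac:(unfold b; nra) Hresb s ltac:(lra)) as Hw1.
  assert (Hw1s : Rabs (w1 s / s) <= b / 2).
  { unfold Rdiv. rewrite Rabs_mult, Rabs_inv, (Rabs_pos_eq s) by lra.
    apply Rmult_le_reg_l with s; [lra|]. field_simplify; lra. }
  pose proof (Rabs_triang (w2 s + w1 s / s) (- (w1 s / s))) as Htri.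
  rewrite Rabs_Ropp in Htri. replace (w2 s + w1 s / s + - (w1 s / s)) with (w2 s) in Htri by ring.
  specialize (Hresb s Hs). unfold b in *. nra.
Qed.

End RadialGronwall.

(** * The nonlinearity *)

Lemma exp_lipschitz_nonpos a b : a <= 0 -> b <= 0 -> Rabs (exp a - exp b) <= Rabs (a - b).
Proof.
  assert (Hle : forall a b, a <= b -> b <= 0 -> 0 <= exp b - exp a <= b - a).
  { intros x y Hxy Hy.
    pose proof (increment_between_of_derive_between exp exp x y 0 1 Hxy) as H.
    rewrite Rmult_0_l, Rmult_1_l in H. apply H.
    - apply cont_Icc_of_continuity; auto. intro z.
      apply continuity_pt_of_ex_derive. auto_derive; auto.
    - intros z _. apply is_derive_exp.
    - intros z Hz. split; [left; apply exp_pos|]. rewrite <- exp_0. apply exp_le_exp_of_le; lra. }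
  intros Ha Hb. destruct (Rle_dec a b) as [Hab|Hab].
  - pose proof (Hle a b Hab Hb). rewrite Rabs_left1, Rabs_left1 by lra. lra.
  - pose proof (Hle b a ltac:(lra) Ha). rewrite !Rabs_pos_eq by lra. lra.
Qed.

Lemma exp_neg_inv_le eps : 0 < eps -> exp (- / eps) <= eps.
Proof.
  intro He. pose proof (exp_ineq1 (/ eps) ltac:(apply Rinv_neq_0_compat; lra)).
  pose proof (Rinv_0_lt_compat _ He).
  rewrite exp_Ropp. replace eps with (/ / eps) at 2 by (field; lra).
  apply Rinv_le_contravar; [apply Rinv_0_lt_compat|]; lra.
Qed.

(* [f = exp g] on [[t0, oo)] with [g = ln f]; only the limit [q > 0] of
   [g'^2 / (g g'')] is retained from (H1), and it forces [g'' = o(g'^2)]. *)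
Record admissible_nonlinearity (f df dg d2g : R -> R) (t0 q : R) : Prop := {
  an_t0 : 0 <= t0;
  an_f_nonneg : forall t, 0 <= t -> 0 <= f t;
  an_f_pos : forall t, t0 <= t -> 0 < f t;
  an_f_cont : cont_within (Ici 0) f;
  an_f_deriv : deriv_within (Ici 0) f df;
  an_df_cont : cont_within (Ici 0) df;
  an_g_cont : cont_within (Ici t0) (fun t => ln (f t));
  an_g_deriv : deriv_within (Ici t0) (fun t => ln (f t)) dg;
  an_dg_cont : cont_within (Ici t0) dg;
  an_dg_deriv : deriv_within (Ici t0) dg d2g;
  an_dg_d2g_pos : forall t, t0 <= t -> 0 < dg t /\ 0 < d2g t;
  an_q_pos : 0 < q;
  an_limit : is_lim (fun t => dg t ^ 2 / (ln (f t) * d2g t)) p_infty q }.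

Section Nonlinearity.

Context {f df dg d2g : R -> R} {t0 q : R}.
Hypothesis Hf : admissible_nonlinearity f df dg d2g t0 q.

Lemma t0_nonneg : 0 <= t0.
Proof. apply Hf. Qed.

Lemma f_nonneg t : 0 <= t -> 0 <= f t.
Proof. apply Hf. Qed.

Lemma f_pos t : t0 <= t -> 0 < f t.
Proof. apply Hf. Qed.

Lemma f_cont : cont_within (Ici 0) f.
Proof. apply Hf. Qed.

Lemma dg_pos t : t0 <= t -> 0 < dg t.
Proof. intro. apply Hf; auto. Qed.

Lemma d2g_pos t : t0 <= t -> 0 < d2g t.
Proof. intro. apply Hf; auto. Qed.

Lemma is_derive_ln_f t : t0 < t -> is_derive (fun t => ln (f t)) t (dg t).
Proof. intro. apply is_derive_of_deriv_within_Ici with t0; [apply Hf | lra]. Qed.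

Lemma is_derive_dg t : t0 < t -> is_derive dg t (d2g t).
Proof. intro. apply is_derive_of_deriv_within_Ici with t0; [apply Hf | lra]. Qed.

Lemma cont_Icc_ln_f a b : t0 <= a -> a <= b -> cont_Icc a b (fun t => ln (f t)).
Proof. intros. apply cont_Icc_of_Ici with t0; auto. apply Hf. Qed.

Lemma cont_Icc_dg a b : t0 <= a -> a <= b -> cont_Icc a b dg.
Proof. intros. apply cont_Icc_of_Ici with t0; auto. apply Hf. Qed.

Lemma cont_Icc_f a b : 0 <= a -> a <= b -> cont_Icc a b f.
Proof. intros. apply cont_Icc_of_Ici with 0; auto. apply Hf. Qed.

Lemma cont_Icc_df a b : 0 <= a -> a <= b -> cont_Icc a b df.
Proof. intros. apply cont_Icc_of_Ici with 0; auto. apply Hf. Qed.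

Lemma df_eq_dg_mul_f t : t0 < t -> df t = dg t * f t.
Proof.
  intro Ht. pose proof t0_nonneg. pose proof (f_pos t ltac:(lra)).
  assert (Hdf : is_derive f t (df t))
    by (apply is_derive_of_deriv_within_Ici with 0; [apply Hf | lra]).
  assert (Hchain : is_derive (fun t => ln (f t)) t (df t * / f t))
    by (apply (is_derive_comp ln f); [apply is_derive_ln |]; auto).
  rewrite <- (is_derive_unique _ _ _ (is_derive_ln_f t Ht)), (is_derive_unique _ _ _ Hchain).
  field. lra.
Qed.

Lemma f_eq_exp_ln t : t0 <= t -> f t = exp (ln (f t)).
Proof. intro. rewrite exp_ln; auto. apply Hf; auto. Qed.

Lemma dg_nondecreasing s t : t0 <= s -> s <= t -> dg s <= dg t.
Proof.
  intros. apply (nondecreasing_of_derive_nonneg dg d2g); auto.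
  - apply cont_Icc_dg; auto.
  - intros x Hx. apply is_derive_dg; lra.
  - intros x Hx. left. apply Hf; lra.
Qed.

Lemma f_nondecreasing s t : t0 <= s -> s <= t -> f s <= f t.
Proof.
  intros. rewrite (f_eq_exp_ln s), (f_eq_exp_ln t) by lra. apply exp_le_exp_of_le.
  apply (nondecreasing_of_derive_nonneg (fun t => ln (f t)) dg); auto.
  - apply cont_Icc_ln_f; auto.
  - intros x Hx. apply is_derive_ln_f; lra.
  - intros x Hx. left. apply dg_pos; lra.
Qed.

Lemma ln_f_increment_bounds v s lo hi :
  t0 <= v -> v <= s -> (forall x, v <= x <= s -> lo <= dg x <= hi) ->
  lo * (s - v) <= ln (f s) - ln (f v) <= hi * (s - v).
Proof.
  intros Hv Hvs Hb. apply (increment_between_of_derive_between (fun t => ln (f t)) dg); auto.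
  - apply cont_Icc_ln_f; auto.
  - intros x Hx. apply is_derive_ln_f; lra.
  - intros x Hx. apply Hb; lra.
Qed.

Lemma ln_f_unbounded X : exists T, t0 + 1 <= T /\ forall t, T <= t -> X <= ln (f t).
Proof.
  pose proof t0_nonneg. set (t1 := t0 + 1).
  pose proof (dg_pos t1 ltac:(unfold t1; lra)) as Hd1.
  assert (Hstep : 0 <= Rabs (X - ln (f t1)) / dg t1)
    by (apply Rdiv_le_0_compat; [apply Rabs_pos | lra]).
  exists (t1 + Rabs (X - ln (f t1)) / dg t1). split; [unfold t1 in *; lra|].
  intros t Ht.
  assert (Hinc : dg t1 * (t - t1) <= ln (f t) - ln (f t1)).
  { apply (ln_f_increment_bounds t1 t (dg t1) (dg t)); try (unfold t1 in *; lra).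
    intros x Hx. split; apply dg_nondecreasing; unfold t1 in *; lra. }
  assert (Rabs (X - ln (f t1)) <= dg t1 * (t - t1)).
  { replace (Rabs (X - ln (f t1))) with (dg t1 * (Rabs (X - ln (f t1)) / dg t1))
      by (field; lra).
    apply Rmult_le_compat_l; lra. }
  pose proof (Rle_abs (X - ln (f t1))). lra.
Qed.

Lemma f_unbounded X : exists T, t0 + 1 <= T /\ forall t, T <= t -> X <= f t.
Proof.
  destruct (ln_f_unbounded (ln (Rmax X 1))) as [T [HT H]]. exists T. split; auto.
  intros t Ht. pose proof t0_nonneg.
  rewrite f_eq_exp_ln by lra.
  pose proof (exp_le_exp_of_le _ _ (H t Ht)) as Hexp.
  rewrite exp_ln in Hexp by (pose proof (Rmax_r X 1); lra).
  pose proof (Rmax_l X 1). lra.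
Qed.

Lemma d2g_little_o eps :
  0 < eps -> exists T, t0 + 1 <= T /\ forall t, T <= t -> d2g t <= eps * dg t ^ 2.
Proof.
  intro He. pose proof t0_nonneg. assert (Hq : 0 < q) by apply Hf.
  assert (Hl : is_lim (fun t => dg t ^ 2 / (ln (f t) * d2g t)) p_infty q) by apply Hf. apply is_lim_spec in Hl.
  destruct (Hl (mkposreal (q / 2) ltac:(lra))) as [M HM]. simpl in HM.
  destruct (ln_f_unbounded (2 / (q * eps))) as [T [HT HgT]].
  exists (Rmax T (M + 1)). split; [pose proof (Rmax_l T (M + 1)); lra|].
  intros t Ht. pose proof (Rmax_l T (M + 1)). pose proof (Rmax_r T (M + 1)).
  specialize (HM t ltac:(lra)). specialize (HgT t ltac:(lra)).
  pose proof (dg_pos t ltac:(lra)) as Hd. pose proof (d2g_pos t ltac:(lra)) as Hd2.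
  assert (H2qe : 0 < 2 / (q * eps)) by (apply Rdiv_lt_0_compat; nra).
  apply Rabs_lt_between in HM.
  assert (Hratio : q / 2 < dg t ^ 2 / (ln (f t) * d2g t)) by lra.
  assert (Hpos : 0 < ln (f t) * d2g t) by nra.
  apply Rmult_lt_compat_r with (r := ln (f t) * d2g t) in Hratio; auto.
  unfold Rdiv at 2 in Hratio. rewrite Rmult_assoc, Rinv_l, Rmult_1_r in Hratio by lra.
  assert (2 / (q * eps) * d2g t <= ln (f t) * d2g t) by (apply Rmult_le_compat_r; lra).
  assert (Hcancel : q / 2 * (2 / (q * eps) * d2g t) = d2g t / eps) by (field; lra).
  assert (d2g t / eps < dg t ^ 2) by nra.
  replace (d2g t) with (eps * (d2g t / eps)) by (field; lra). nra.
Qed.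

Lemma dg_near_lower_bound e T M mu xi :
  (forall t, T <= t -> d2g t <= e * dg t ^ 2) -> t0 < T -> 0 <= e -> 0 <= M ->
  T <= xi <= mu -> dg mu * (mu - xi) <= M -> dg mu / (1 + e * M) <= dg xi.
Proof.
  intros Hsmall HT He HM Hxi Hgap.
  pose proof (dg_pos xi ltac:(lra)) as Hdxi. pose proof (dg_pos mu ltac:(lra)) as Hdmu.
  assert (Hinv : - e * (mu - xi) <= / dg mu - / dg xi).
  { apply (increment_between_of_derive_between (fun x => / dg x) (fun x => - d2g x / dg x ^ 2)
      xi mu (- e) 0); try lra.
    - apply cont_Icc_inv; [lra | apply cont_Icc_dg; lra |].
      intros x Hx. pose proof (dg_pos x ltac:(lra)). lra.
    - intros x Hx. apply is_derive_inv; [apply is_derive_dg; lra|].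
      pose proof (dg_pos x ltac:(lra)). lra.
    - intros x Hx. pose proof (dg_pos x ltac:(lra)) as Hdx.
      specialize (Hsmall x ltac:(lra)). pose proof (d2g_pos x ltac:(lra)).
      assert (Hsq : 0 < dg x ^ 2) by (apply pow_lt; lra).
      split.
      + apply Rmult_le_reg_r with (dg x ^ 2); auto.
        unfold Rdiv. rewrite Rmult_assoc, Rinv_l by lra. lra.
      + assert (0 <= d2g x / dg x ^ 2) by (apply Rdiv_le_0_compat; lra).
        unfold Rdiv in *. lra. }
  assert (Hup : / dg xi <= (1 + e * M) / dg mu).
  { assert (e * (mu - xi) <= e * (M / dg mu)).
    { apply Rmult_le_compat_l; auto. apply Rmult_le_reg_l with (dg mu); auto.
      replace (dg mu * (M / dg mu)) with M by (field; lra). lra. }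
    replace ((1 + e * M) / dg mu) with (/ dg mu + e * (M / dg mu)) by (field; lra). lra. }
  assert (0 < 1 + e * M) by nra.
  replace (dg mu / (1 + e * M)) with (/ ((1 + e * M) / dg mu)) by (field; lra).
  rewrite <- (Rinv_inv (dg xi)). apply Rinv_le_contravar; auto.
  apply Rinv_0_lt_compat; lra.
Qed.

Lemma f_ratio_near e T M mu v :
  (forall t, T <= t -> d2g t <= e * dg t ^ 2) -> t0 < T -> 0 <= e -> 0 <= M ->
  T <= v <= mu -> dg mu * (mu - v) <= M ->
  Rabs (f v / f mu - exp (dg mu * (v - mu))) <= e * M * M.
Proof.
  intros Hsmall HT He HM Hv Hgap.
  set (D := dg mu) in *. pose proof (dg_pos mu ltac:(lra)) as HD. fold D in HD.
  assert (H1eM : 0 < 1 + e * M) by nra.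
  assert (Hinc : D / (1 + e * M) * (mu - v) <= ln (f mu) - ln (f v) <= D * (mu - v)).
  { apply ln_f_increment_bounds; try lra. intros x Hx. split.
    - apply (dg_near_lower_bound e T M); auto; try lra.
      fold D. assert (D * (mu - x) <= D * (mu - v)) by (apply Rmult_le_compat_l; lra). lra.
    - apply dg_nondecreasing; lra. }
  replace (f v / f mu) with (exp (ln (f v) - ln (f mu)))
    by (unfold Rminus; rewrite exp_plus, exp_Ropp, <- (f_eq_exp_ln v), <- (f_eq_exp_ln mu) by lra;
        reflexivity).
  assert (Hdiff : 0 <= D * (mu - v) - D / (1 + e * M) * (mu - v) <= M * (e * M)).
  { replace (D * (mu - v) - D / (1 + e * M) * (mu - v))
      with (D * (mu - v) * (e * M / (1 + e * M))) by (field; lra).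
    assert (0 <= D * (mu - v)) by nra.
    assert (0 <= e * M / (1 + e * M) <= e * M).
    { split; [apply Rdiv_le_0_compat; nra|].
      apply Rmult_le_reg_r with (1 + e * M); auto.
      unfold Rdiv. rewrite Rmult_assoc, Rinv_l by lra. nra. }
    split; [nra|]. apply Rmult_le_compat; lra. }
  eapply Rle_trans; [apply exp_lipschitz_nonpos|].
  - assert (0 <= D / (1 + e * M) * (mu - v)) by (apply Rmult_le_pos; [apply Rdiv_le_0_compat|]; lra).
    lra.
  - assert (0 <= D * (mu - v)) by (apply Rmult_le_pos; lra). lra.
  - rewrite Rabs_pos_eq; lra.
Qed.

Lemma f_ratio_far e T M mu v :
  (forall t, T <= t -> d2g t <= e * dg t ^ 2) -> t0 < T -> 0 <= e -> 0 <= M ->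
  T <= mu - M / dg mu <= mu -> t0 <= v <= mu - M / dg mu ->
  f v / f mu <= exp (- (M / (1 + e * M))).
Proof.
  intros Hsmall HT He HM Hfar Hv.
  set (D := dg mu) in *. pose proof (dg_pos mu ltac:(lra)) as HD. fold D in HD.
  set (v' := mu - M / D) in *.
  assert (HMD : 0 <= M / D) by (apply Rdiv_le_0_compat; lra).
  assert (H1eM : 0 < 1 + e * M) by nra.
  pose proof (f_pos mu ltac:(lra)). pose proof (f_pos v ltac:(lra)).
  assert (Hmono : f v / f mu <= f v' / f mu).
  { unfold Rdiv. apply Rmult_le_compat_r; [left; apply Rinv_0_lt_compat; lra|].
    apply f_nondecreasing; lra. }
  assert (Hinc : D / (1 + e * M) * (mu - v') <= ln (f mu) - ln (f v') <= D * (mu - v')).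
  { apply ln_f_increment_bounds; try lra. intros x Hx. split.
    - apply (dg_near_lower_bound e T M); auto; try (unfold v' in *; lra).
      fold D. unfold v' in Hx.
      assert (D * (mu - x) <= D * (M / D)) by (apply Rmult_le_compat_l; lra).
      replace (D * (M / D)) with M in * by (field; lra). lra.
    - apply dg_nondecreasing; unfold v' in *; lra. }
  destruct Hinc as [Hlo _].
  replace (D / (1 + e * M) * (mu - v')) with (M / (1 + e * M)) in Hlo
    by (unfold v'; field; lra).
  eapply Rle_trans; [apply Hmono|].
  rewrite (f_eq_exp_ln v'), (f_eq_exp_ln mu) by (unfold v' in *; lra).
  unfold Rdiv at 1. rewrite <- exp_Ropp, <- exp_plus. apply exp_le_exp_of_le. lra.
Qed.

Lemma f_bounded_on_initial : exists C, 0 <= C /\ forall t, 0 <= t <= t0 + 1 -> f t <= C.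
Proof.
  pose proof t0_nonneg.
  assert (Hc : cont_Icc 0 (t0 + 1) f) by (apply cont_Icc_f; lra).
  destruct (continuity_ab_maj (fun y => f (clamp 0 (t0 + 1) y)) 0 (t0 + 1)) as [m [Hm _]];
    [lra | intros; apply Hc |].
  exists (Rmax 0 (f (clamp 0 (t0 + 1) m))). split; [apply Rmax_l|]. intros t Ht.
  specialize (Hm t Ht). rewrite clamp_id in Hm by lra.
  pose proof (Rmax_r 0 (f (clamp 0 (t0 + 1) m))). lra.
Qed.

Lemma f_le_f_large C mu :
  (forall t, 0 <= t <= t0 + 1 -> f t <= C) -> C <= f mu -> t0 + 1 <= mu ->
  forall v, 0 <= v <= mu -> f v <= f mu.
Proof.
  intros HC HCmu Hmu v Hv. destruct (Rle_dec (t0 + 1) v).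
  - apply f_nondecreasing; lra.
  - specialize (HC v ltac:(lra)). lra.
Qed.

(* Near [mu], on the scale [1 / g'(mu)], [g] is affine up to [o(1)] because
   [g'' = o(g'^2)]; farther away both sides are at most [exp (- M / 2)]. *)
Lemma f_ratio_close e T M C mu :
  (forall t, T <= t -> d2g t <= e * dg t ^ 2) -> t0 + 1 <= T -> 0 <= e -> 0 <= M -> e * M <= 1 ->
  (forall t, 0 <= t <= t0 + 1 -> f t <= C) -> C * exp (M / 2) <= f mu ->
  T + M / dg (t0 + 1) <= mu ->
  forall v, 0 <= v <= mu ->
  Rabs (f v / f mu - exp (dg mu * (v - mu))) <= Rmax (e * M * M) (exp (- (M / 2))).
Proof.
  intros Hsmall HT He HM HeM HC HCmu Hmu v Hv.
  pose proof t0_nonneg. assert (0 <= e * M) by (apply Rmult_le_pos; lra). pose proof (dg_pos (t0 + 1) ltac:(lra)) as Hd1.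
  assert (HMd : 0 <= M / dg (t0 + 1)) by (apply Rdiv_le_0_compat; lra).
  set (D := dg mu).
  assert (HD : dg (t0 + 1) <= D) by (apply dg_nondecreasing; lra).
  assert (HMD : M / D <= M / dg (t0 + 1)).
  { unfold Rdiv. apply Rmult_le_compat_l; [lra|]. apply Rinv_le_contravar; lra. }
  assert (HMD0 : 0 <= M / D) by (apply Rdiv_le_0_compat; lra).
  assert (HDM : D * (M / D) = M) by (field; lra).
  destruct (Rle_dec (D * (mu - v)) M) as [Hnear|Hfar].
  { eapply Rle_trans; [apply (f_ratio_near e T M); auto; try lra|apply Rmax_l].
    split; [|lra]. assert (mu - v <= M / D); [|lra].
    apply Rmult_le_reg_l with D; lra. }
  set (small := exp (- (M / 2))).
  pose proof (exp_pos (- (M / 2))) as Hsmall0. fold small in Hsmall0.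
  assert (Hfmu : 0 < f mu) by (apply f_pos; lra).
  assert (Hz : 0 < exp (D * (v - mu)) <= small).
  { split; [apply exp_pos|]. apply exp_le_exp_of_le. lra. }
  assert (Hratio : 0 <= f v / f mu <= small).
  { split; [apply Rdiv_le_0_compat; [apply Hf|]; lra|].
    destruct (Rle_dec (t0 + 1) v).
    - eapply Rle_trans; [apply (f_ratio_far e T M); auto; fold D; try lra|].
      + split; [lra|]. assert (M / D < mu - v); [|lra].
        apply Rmult_lt_reg_l with D; lra.
      + apply exp_le_exp_of_le, Ropp_le_contravar. unfold Rdiv.
        apply Rmult_le_compat_l; [lra|]. apply Rinv_le_contravar; lra.
    - apply Rmult_le_reg_r with (f mu); auto. unfold Rdiv.
      rewrite Rmult_assoc, Rinv_l by lra. specialize (HC v ltac:(lra)).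
      unfold small. rewrite exp_Ropp.
      apply Rmult_le_reg_r with (exp (M / 2)); [apply exp_pos|].
      replace (/ exp (M / 2) * f mu * exp (M / 2)) with (f mu)
        by (field; pose proof (exp_pos (M / 2)); lra).
      pose proof (exp_pos (M / 2)). nra. }
  eapply Rle_trans; [|apply Rmax_r]. apply Rabs_le. unfold D in *. lra.
Qed.

Lemma f_ratio_exp_approx eps :
  0 < eps <= 1 -> exists T, t0 + 1 <= T /\ forall mu, T <= mu ->
  (forall v, 0 <= v <= mu -> f v <= f mu) /\
  (forall v, 0 <= v <= mu -> Rabs (f v / f mu - exp (dg mu * (v - mu))) <= eps).
Proof.
  intros Heps. pose proof t0_nonneg.
  set (M := 2 / eps). set (e := eps / (M * M)).
  assert (HM : M / 2 = / eps) by (unfold M; field; lra).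
  assert (HM2 : 2 <= M) by (unfold M; apply Rmult_le_reg_r with eps; [lra|];
    unfold Rdiv; rewrite Rmult_assoc, Rinv_l; nra).
  assert (He : 0 < e) by (unfold e; apply Rdiv_lt_0_compat; nra).
  assert (HeMM : e * M * M = eps) by (unfold e; field; lra).
  assert (HeM1 : e * M <= 1) by (apply Rmult_le_reg_r with M; nra).
  destruct (d2g_little_o e He) as [T1 [HT1 Hsmall]].
  destruct f_bounded_on_initial as [C [HC0 HC]].
  destruct (f_unbounded (C * exp (M / 2))) as [T2 [HT2 Hbig]].
  pose proof (dg_pos (t0 + 1) ltac:(lra)) as Hd1.
  set (T := Rmax (T1 + M / dg (t0 + 1)) T2).
  exists T. split; [pose proof (Rmax_r (T1 + M / dg (t0 + 1)) T2); unfold T in *; lra|].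
  intros mu Hmu. pose proof (Rmax_l (T1 + M / dg (t0 + 1)) T2).
  pose proof (Rmax_r (T1 + M / dg (t0 + 1)) T2). specialize (Hbig mu ltac:(unfold T in *; lra)).
  assert (C <= C * exp (M / 2)) by (pose proof (exp_ge_1 (M / 2) ltac:(lra)); nra).
  split; [apply (f_le_f_large C); auto; unfold T in *; lra|].
  intros v Hv. eapply Rle_trans; [apply (f_ratio_close e T1 M C); auto; unfold T in *; lra|].
  rewrite HeMM, HM. apply Rmax_lub; [lra | apply exp_neg_inv_le; lra].
Qed.

End Nonlinearity.

Lemma ex_RInt_of_cont_Icc I a b : a <= b -> cont_Icc a b I -> ex_RInt I a b.
Proof.
  intros Hab HI. apply ex_RInt_ext with (f := fun y => I (clamp a b y)).
  - rewrite Rmin_left, Rmax_right by lra. intros x Hx. rewrite clamp_id; lra.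
  - apply (ex_RInt_continuous (V := R_CompleteNormedModule)).
    intros z _. apply continuity_pt_filterlim, HI.
Qed.

(* Unlike [RInt_Derive], only the open interval carries derivatives. *)
Lemma RInt_eq_increment I Psi a b :
  a <= b -> cont_Icc a b I -> cont_Icc a b Psi ->
  (forall x, a < x < b -> is_derive Psi x (I x)) -> RInt I a b = Psi b - Psi a.
Proof.
  intros Hab HI HPsi HD.
  set (It := fun y => I (clamp a b y)).
  assert (Hex : forall y z, ex_RInt It y z).
  { intros y z. apply (ex_RInt_continuous (V := R_CompleteNormedModule)).
    intros w _. apply continuity_pt_filterlim, HI. }
  set (Phi := fun r => RInt It a r).
  assert (HPhi : forall x, is_derive Phi x (It x)).
  { intro x. apply (is_derive_RInt It Phi a x).
    - exists (mkposreal 1 Rlt_0_1). intros y _.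
      apply (RInt_correct (V := R_CompleteNormedModule)), Hex.
    - apply continuity_pt_filterlim, HI. }
  assert (HPhi_cont : cont_Icc a b Phi).
  { apply cont_Icc_of_continuity; auto. intro x.
    apply continuity_pt_of_ex_derive. exists (It x). apply HPhi. }
  assert (HIt : forall x, a < x < b -> It x = I x) by (intros; unfold It; rewrite clamp_id; lra).
  assert (E : RInt I a b = Phi b - Phi a).
  { unfold Phi. rewrite RInt_point, Rminus_0_r. apply RInt_ext.
    rewrite Rmin_left, Rmax_right by lra. intros x Hx. rewrite HIt; lra. }
  rewrite E. apply Rle_antisym.
  - apply (increment_le_of_derive_le Phi It Psi I a b); auto.
    intros x Hx. rewrite HIt; lra.
  - apply (increment_le_of_derive_le Psi I Phi It a b); auto.
    intros x Hx. rewrite HIt; lra.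
Qed.

Lemma RInt_between_scaled I J a b lo hi :
  a <= b -> ex_RInt I a b -> ex_RInt J a b ->
  (forall x, a < x < b -> lo * I x <= J x <= hi * I x) ->
  lo * RInt I a b <= RInt J a b <= hi * RInt I a b.
Proof.
  intros Hab HI HJ Hb.
  assert (Hscal : forall k, RInt (fun x => k * I x) a b = k * RInt I a b)
    by (intro k; apply (RInt_scal I a b k HI)).
  split; rewrite <- Hscal; apply RInt_le; auto; try apply (ex_RInt_scal I a b _ HI);
    intros x Hx; apply Hb; auto.
Qed.

(** * Radial solutions *)

Record radial_solution (h f : R -> R) (lam mu : R) (u du d2u : R -> R) : Prop := {
  rs_lam_pos : 0 < lam;
  rs_mu_pos : 0 < mu;
  rs_C2 : C2_on (Icc 0 1) u du d2u;
  rs_ode : forall r, 0 < r < 1 -> - d2u r - / r * du r = lam * h r * f (u r);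
  rs_pos : forall r, 0 < r < 1 -> 0 < u r;
  rs_bc : u 0 = mu /\ du 0 = 0 /\ u 1 = 0 }.

Section RadialSolution.

Context {h f : R -> R} {lam mu : R} {u du d2u : R -> R}.
Hypothesis Hh_cont : cont_Icc 0 1 h.
Hypothesis Hh_pos : forall r, 0 <= r <= 1 -> 0 < h r.
Hypothesis Hf_nonneg : forall t, 0 <= t -> 0 <= f t.
Hypothesis Hf_cont : cont_within (Ici 0) f.
Hypothesis Hu : radial_solution h f lam mu u du d2u.

Lemma sol_is_derive_u r : 0 < r < 1 -> is_derive u r (du r).
Proof. intro. apply is_derive_of_deriv_within_Icc with 0 1; auto. apply Hu. Qed.

Lemma sol_is_derive_du r : 0 < r < 1 -> is_derive du r (d2u r).
Proof. intro. apply is_derive_of_deriv_within_Icc with 0 1; auto. apply Hu. Qed.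

Lemma sol_cont_u : cont_Icc 0 1 u.
Proof. apply cont_Icc_of_Icc; [lra | apply Hu]. Qed.

Lemma sol_cont_du : cont_Icc 0 1 du.
Proof. apply cont_Icc_of_Icc; [lra | apply Hu]. Qed.

Lemma sol_cont_d2u : cont_Icc 0 1 d2u.
Proof. apply cont_Icc_of_Icc; [lra | apply Hu]. Qed.

Lemma sol_u_nonneg r : 0 <= r <= 1 -> 0 <= u r.
Proof.
  intro Hr. destruct (rs_bc _ _ _ _ _ _ _ Hu) as [Hu0 [_ Hu1]].
  destruct (Req_dec r 0) as [->|]; [rewrite Hu0; left; apply Hu|].
  destruct (Req_dec r 1) as [->|]; [lra|].
  left; apply Hu; lra.
Qed.

Lemma sol_source_nonneg r : 0 < r < 1 -> 0 <= lam * h r * f (u r) * r.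
Proof.
  intro Hr. pose proof (rs_lam_pos _ _ _ _ _ _ _ Hu). pose proof (Hh_pos r ltac:(lra)).
  pose proof (Hf_nonneg (u r) (sol_u_nonneg r ltac:(lra))).
  apply Rmult_le_pos; [|lra]. apply Rmult_le_pos; nra.
Qed.

Lemma sol_is_derive_flux r :
  0 < r < 1 -> is_derive (fun x => x * du x) r (- (lam * h r * f (u r) * r)).
Proof.
  intro Hr.
  assert (H : is_derive (fun x => x * du x) r (1 * du r + r * d2u r)).
  { apply Derive.is_derive_mult; [apply (is_derive_id (K := R_AbsRing)) | apply sol_is_derive_du; auto]. }
  replace (- (lam * h r * f (u r) * r)) with (1 * du r + r * d2u r); auto.
  rewrite <- (rs_ode _ _ _ _ _ _ _ Hu r Hr). field. lra.
Qed.

Lemma sol_cont_flux a b : 0 <= a -> a <= b -> b <= 1 -> cont_Icc a b (fun x => x * du x).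
Proof.
  intros. apply cont_Icc_mult; [apply cont_Icc_id; auto|].
  apply (cont_Icc_subinterval 0 1); auto. apply sol_cont_du.
Qed.

Lemma sol_du_nonpos r : 0 < r <= 1 -> du r <= 0.
Proof.
  intro Hr.
  assert (H : (fun x => x * du x) r <= (fun x => x * du x) 0).
  { apply (nonincreasing_of_derive_nonpos (fun x => x * du x)
      (fun x => - (lam * h x * f (u x) * x))); try lra.
    - apply sol_cont_flux; lra.
    - intros x Hx. apply sol_is_derive_flux; lra.
    - intros x Hx. pose proof (sol_source_nonneg x ltac:(lra)). lra. }
  simpl in H. nra.
Qed.

Lemma sol_u_nonincreasing a b : 0 <= a -> a <= b -> b <= 1 -> u b <= u a.
Proof.
  intros. apply (nonincreasing_of_derive_nonpos u du); auto.
  - apply (cont_Icc_subinterval 0 1); auto. apply sol_cont_u.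
  - intros x Hx. apply sol_is_derive_u; lra.
  - intros x Hx. apply sol_du_nonpos; lra.
Qed.

Lemma sol_u_le_mu r : 0 <= r <= 1 -> u r <= mu.
Proof.
  intro. rewrite <- (proj1 (rs_bc _ _ _ _ _ _ _ Hu)). apply sol_u_nonincreasing; lra.
Qed.

Lemma sol_mu_le_half_sup G :
  (forall r, 0 <= r <= 1 -> lam * h r * f (u r) <= G) -> mu <= G / 2.
Proof.
  intros HG. destruct (rs_bc _ _ _ _ _ _ _ Hu) as [Hu0 [Hdu0 Hu1]].
  assert (HG0 : 0 <= G).
  { specialize (HG (1 / 2) ltac:(lra)). pose proof (sol_source_nonneg (1 / 2) ltac:(lra)). nra. }
  assert (Hdu : forall r, 0 < r < 1 -> - G * r / 2 <= du r).
  { intros r Hr.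
    assert (H : - G / 2 * (r * r) - - G / 2 * (0 * 0) <= r * du r - 0 * du 0).
    { apply (increment_le_of_derive_le (fun x => - G / 2 * (x * x)) (fun x => - G * x)
        (fun x => x * du x) (fun x => - (lam * h x * f (u x) * x))); try lra.
      - apply cont_Icc_of_continuity; [lra|]. intro.
        apply continuity_pt_of_ex_derive. auto_derive; auto.
      - apply sol_cont_flux; lra.
      - intros x Hx. auto_derive; auto. field.
      - intros x Hx. apply sol_is_derive_flux; lra.
      - intros x Hx. specialize (HG x ltac:(lra)). nra. }
    apply Rmult_le_reg_l with r; lra. }
  assert (H : - G / 2 * 1 - - G / 2 * 0 <= u 1 - u 0).
  { apply (increment_le_of_derive_le (fun x => - G / 2 * x) (fun _ => - G / 2) u du); try lra.
    - apply cont_Icc_mult; [apply cont_Icc_const | apply cont_Icc_id; lra].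
    - apply sol_cont_u.
    - intros x Hx. pose proof (is_derive_scal (fun y => y) x (- G / 2) 1 (is_derive_id x)) as Hd.
      rewrite Rmult_1_r in Hd. exact Hd.
    - intros x Hx. apply sol_is_derive_u; auto.
    - intros x Hx. specialize (Hdu x Hx). nra. }
  lra.
Qed.

Lemma sol_cont_weighted F :
  cont_Icc 0 mu F -> cont_Icc 0 1 (fun r => lam * h r * F (u r) * r).
Proof.
  intro HF. pose proof (rs_mu_pos _ _ _ _ _ _ _ Hu).
  repeat apply cont_Icc_mult; auto using cont_Icc_const.
  - apply (cont_Icc_comp 0 1 0 mu); auto; try lra.
    + apply sol_cont_u.
    + intros x Hx. split; [apply sol_u_nonneg | apply sol_u_le_mu]; auto.
  - apply cont_Icc_id; lra.
Qed.

Lemma sol_ex_RInt_weighted F rho :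
  cont_Icc 0 mu F -> 0 <= rho <= 1 -> ex_RInt (fun r => lam * h r * F (u r) * r) 0 rho.
Proof.
  intros HF Hrho. apply ex_RInt_of_cont_Icc; [lra|].
  apply (cont_Icc_subinterval 0 1); try lra. apply sol_cont_weighted, HF.
Qed.

Lemma sol_flux_identity rho :
  0 <= rho <= 1 -> RInt (fun r => lam * h r * f (u r) * r) 0 rho = - (rho * du rho).
Proof.
  intro Hr. rewrite (RInt_eq_increment _ (fun x => - (x * du x))); [simpl; ring | lra | | |].
  - apply (cont_Icc_subinterval 0 1); try lra. apply sol_cont_weighted.
    apply (cont_Icc_of_Ici 0 0 mu f); auto; [lra | left; apply Hu].
  - apply cont_Icc_opp, sol_cont_flux; lra.
  - intros x Hx. rewrite <- (Ropp_involutive (lam * h x * f (u x) * x)).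
    apply (is_derive_opp (fun x => x * du x)), sol_is_derive_flux; lra.
Qed.

End RadialSolution.

(** * The limit profile *)

Definition z1 (s : R) : R := - 4 * s / (8 + s ^ 2).
Definition z2 (s : R) : R := - 4 * (8 - s ^ 2) / (8 + s ^ 2) ^ 2.

Lemma z_denom_pos s : 0 < 8 + s ^ 2.
Proof. pose proof (pow2_ge_0 s). lra. Qed.

Lemma is_derive_z0 s : is_derive z0 s (z1 s).
Proof.
  unfold z0, z1. pose proof (z_denom_pos s) as H. simpl in H.
  auto_derive.
  - repeat split; try nra. apply Rdiv_lt_0_compat; nra.
  - simpl. field. lra.
Qed.

Lemma is_derive_z1 s : is_derive z1 s (z2 s).
Proof. unfold z1, z2. pose proof (z_denom_pos s). auto_derive; [lra | field; lra]. Qed.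

Lemma Derive_z0 s : Derive z0 s = z1 s.
Proof. apply is_derive_unique, is_derive_z0. Qed.

Lemma Derive_Derive_z0 s : Derive (Derive z0) s = z2 s.
Proof. rewrite (Derive_ext _ z1 s Derive_z0). apply is_derive_unique, is_derive_z1. Qed.

Lemma continuity_z0 x : continuity_pt z0 x.
Proof. apply continuity_pt_of_ex_derive. exists (z1 x). apply is_derive_z0. Qed.

Lemma continuity_z1 x : continuity_pt z1 x.
Proof. apply continuity_pt_of_ex_derive. exists (z2 x). apply is_derive_z1. Qed.

Lemma continuity_z2 x : continuity_pt z2 x.
Proof.
  apply continuity_pt_of_ex_derive. unfold z2. pose proof (z_denom_pos x) as H. simpl in H.
  auto_derive. nra.
Qed.

Lemma exp_z0 s : exp (z0 s) = 64 / (8 + s ^ 2) ^ 2.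
Proof.
  unfold z0. pose proof (z_denom_pos s).
  rewrite exp_ln; auto. apply Rdiv_lt_0_compat; [lra | apply pow_lt; lra].
Qed.

Lemma z0_0 : z0 0 = 0.
Proof. unfold z0. replace (64 / (8 + 0 ^ 2) ^ 2) with 1 by (simpl; field). apply ln_1. Qed.

Lemma z1_0 : z1 0 = 0.
Proof. unfold z1. simpl. field. Qed.

Lemma z0_nonpos s : z0 s <= 0.
Proof.
  rewrite <- (ln_exp (z0 s)), <- ln_1, exp_z0. pose proof (z_denom_pos s).
  assert (Hpos : 0 < 64 / (8 + s ^ 2) ^ 2) by (apply Rdiv_lt_0_compat; [lra | apply pow_lt; lra]).
  assert (Hle : 64 / (8 + s ^ 2) ^ 2 <= 1).
  { apply Rmult_le_reg_r with ((8 + s ^ 2) ^ 2); [apply pow_lt; lra|].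
    unfold Rdiv. rewrite Rmult_assoc, Rinv_l by (apply pow_nonzero; lra).
    pose proof (pow2_ge_0 s). nra. }
  destruct (Req_dec (64 / (8 + s ^ 2) ^ 2) 1) as [->|]; [lra|].
  left. apply ln_increasing; lra.
Qed.

Lemma z_ode s : s <> 0 -> z2 s + z1 s / s = - exp (z0 s).
Proof. intro Hs. rewrite exp_z0. unfold z1, z2. pose proof (z_denom_pos s). field. lra. Qed.

Lemma z1_flux s : - (s * z1 s) = 4 - 32 / (8 + s ^ 2).
Proof. unfold z1. pose proof (z_denom_pos s). field. lra. Qed.

(** * Blow-up at the origin *)

Lemma Rabs_le_at_0_of_continuity (phi : R -> R) a E :
  0 < a -> continuity_pt phi 0 -> (forall s, 0 < s < a -> Rabs (phi s) <= E) ->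
  Rabs (phi 0) <= E.
Proof.
  intros Ha Hc HB. apply Rnot_lt_le. intro Hlt.
  destruct (proj1 (continuity_pt_eps phi 0) Hc (Rabs (phi 0) - E) ltac:(lra)) as [d [Hd Hy]].
  set (s := Rmin (d / 2) (a / 2)).
  assert (0 < s) by (apply Rmin_pos; lra).
  pose proof (Rmin_l (d / 2) (a / 2)). pose proof (Rmin_r (d / 2) (a / 2)).
  specialize (Hy s). rewrite Rminus_0_r, Rabs_pos_eq in Hy by lra.
  specialize (Hy ltac:(unfold s in *; lra)). specialize (HB s ltac:(unfold s in *; lra)).
  pose proof (Rabs_triang_inv (phi 0) (phi s)). rewrite <- Rabs_Ropp in Hy.
  replace (- (phi s - phi 0)) with (phi 0 - phi s) in Hy by ring. lra.
Qed.

Lemma is_derive_rescale (phi : R -> R) c s l :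
  is_derive phi (c * s) l -> is_derive (fun y => phi (c * y)) s (c * l).
Proof.
  intro H. apply (is_derive_comp phi (fun y => c * y)); auto.
  pose proof (is_derive_scal (fun y => y) s c 1 (is_derive_id s)) as Hd.
  rewrite Rmult_1_r in Hd. exact Hd.
Qed.

Lemma Rabs_div_sub_1_le a m D Mz tau :
  0 < D -> 0 < m -> 0 < tau -> Rabs (D * (a - m)) <= Mz -> Mz / tau <= D * m ->
  Rabs (a / m - 1) <= tau.
Proof.
  intros HD Hm Htau Ha Hm'.
  replace (a / m - 1) with (D * (a - m) / (D * m)) by (field; lra).
  unfold Rdiv. rewrite Rabs_mult, Rabs_inv, (Rabs_pos_eq (D * m)) by nra.
  apply Rmult_le_reg_r with (D * m); [nra|].
  rewrite Rmult_assoc, Rinv_l, Rmult_1_r by nra.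
  apply Rmult_le_compat_l with (r := tau) in Hm'; [|lra].
  replace (tau * (Mz / tau)) with Mz in Hm' by (field; lra). lra.
Qed.

Lemma ratio_close_near_0 (h : R -> R) th :
  cont_Icc 0 1 h -> 0 < h 0 -> 0 < th ->
  exists d, 0 < d <= 1 /\ forall r, 0 <= r <= d -> Rabs (h r / h 0 - 1) <= th.
Proof.
  intros Hc Hh0 Hth.
  destruct (proj1 (continuity_pt_eps _ 0) (Hc 0) (th * h 0) ltac:(nra)) as [d [Hd Hy]].
  exists (Rmin (d / 2) 1). split; [split; [apply Rmin_pos|apply Rmin_r]; lra|].
  intros r Hr. pose proof (Rmin_l (d / 2) 1). pose proof (Rmin_r (d / 2) 1).
  specialize (Hy r). rewrite !clamp_id in Hy by lra.
  rewrite Rminus_0_r, Rabs_pos_eq in Hy by lra. specialize (Hy ltac:(lra)).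
  replace (h r / h 0 - 1) with ((h r - h 0) / h 0) by (field; lra).
  unfold Rdiv. rewrite Rabs_mult, Rabs_inv, (Rabs_pos_eq (h 0)) by lra.
  apply Rmult_le_reg_r with (h 0); auto. rewrite Rmult_assoc, Rinv_l by lra. lra.
Qed.

Definition gamma0 (lam : R) (h df : R -> R) (mu : R) : R := / sqrt (lam * h 0 * df mu).

Lemma gamma0_pos lam h df mu : 0 < lam * h 0 * df mu -> 0 < gamma0 lam h df mu.
Proof. intro. apply Rinv_0_lt_compat, sqrt_lt_R0; auto. Qed.

Lemma gamma0_sq lam h df mu :
  0 < lam * h 0 * df mu -> gamma0 lam h df mu ^ 2 = / (lam * h 0 * df mu).
Proof. intro. unfold gamma0. rewrite pow_inv. simpl. rewrite Rmult_1_r, sqrt_sqrt; lra. Qed.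

Section Rescaling.

Context {h f df dg d2g : R -> R} {t0 q lam mu : R} {u du d2u : R -> R}.
Hypothesis Hf : admissible_nonlinearity f df dg d2g t0 q.
Hypothesis Hh_cont : cont_Icc 0 1 h.
Hypothesis Hh_pos : forall r, 0 <= r <= 1 -> 0 < h r.
Hypothesis Hu : radial_solution h f lam mu u du d2u.
Hypothesis Hmu : t0 < mu.

Local Notation D := (dg mu).
Local Notation gam := (gamma0 lam h df mu).
Local Notation w s := (D * (u (gam * s) - mu) - z0 s).
Local Notation w1 s := (D * gam * du (gam * s) - z1 s).
Local Notation w2 s := (D * gam ^ 2 * d2u (gam * s) - z2 s).

Lemma scale_factor_pos : 0 < lam * h 0 * df mu.
Proof.
  rewrite (df_eq_dg_mul_f Hf mu Hmu).
  pose proof (rs_lam_pos _ _ _ _ _ _ _ Hu). pose proof (Hh_pos 0 ltac:(lra)).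
  pose proof (dg_pos Hf mu ltac:(lra)). pose proof (f_pos Hf mu ltac:(lra)).
  repeat apply Rmult_lt_0_compat; auto.
Qed.

(* The scaling [lam h(0) g'(mu) f(mu) gam^2 = 1] turns the equation for
   [u] into the Liouville equation for [z0] up to the errors of
   [h(gam s) ~ h 0] and [f(u) / f(mu) ~ exp (g'(mu) (u - mu))]. *)
Lemma rescaled_residual th s :
  (forall v, 0 <= v <= mu -> f v <= f mu) ->
  (forall v, 0 <= v <= mu -> Rabs (f v / f mu - exp (D * (v - mu))) <= th) ->
  0 < gam * s < 1 -> Rabs (h (gam * s) / h 0 - 1) <= th ->
  Rabs ((D * gam ^ 2 * d2u (gam * s) - z2 s) + (D * gam * du (gam * s) - z1 s) / s)
    <= Rabs (D * (u (gam * s) - mu) - z0 s) + 2 * th.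
Proof.
  intros Hmono Happrox Hr Hh.
  pose proof t0_nonneg Hf. pose proof (f_pos Hf mu ltac:(lra)) as Hfmu.
  pose proof (Hh_pos 0 ltac:(lra)) as Hh0. pose proof (dg_pos Hf mu ltac:(lra)) as HD.
  pose proof (gamma0_pos _ _ _ _ scale_factor_pos) as Hg.
  assert (Hs : 0 < s) by (apply Rmult_lt_reg_l with gam; lra).
  set (r := gam * s) in *.
  assert (Hur : 0 <= u r <= mu) by (split; [apply (sol_u_nonneg Hu) | apply (sol_u_le_mu Hh_pos (f_nonneg Hf) Hu)]; lra).
  set (F := f (u r) / f mu).
  assert (HF : 0 <= F <= 1).
  { unfold F. split; [apply Rdiv_le_0_compat; [apply Hf|]; lra|].
    apply Rmult_le_reg_r with (f mu); auto. unfold Rdiv.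
    rewrite Rmult_assoc, Rinv_l by lra. specialize (Hmono (u r) Hur). lra. }
  assert (Hscale : D * gam ^ 2 * lam = / (h 0 * f mu)).
  { rewrite (gamma0_sq _ _ _ _ scale_factor_pos), (df_eq_dg_mul_f Hf mu Hmu).
    field. pose proof (rs_lam_pos _ _ _ _ _ _ _ Hu). repeat split; lra. }
  assert (Hres : D * gam ^ 2 * d2u r - z2 s + (D * gam * du r - z1 s) / s
                 = - (h r / h 0 * F) + exp (z0 s)).
  { replace (D * gam ^ 2 * d2u r - z2 s + (D * gam * du r - z1 s) / s)
      with (D * gam ^ 2 * (d2u r + / r * du r) - (z2 s + z1 s / s)) by (unfold r; field; lra).
    rewrite z_ode by lra.
    replace (d2u r + / r * du r) with (- (lam * h r * f (u r)))
      by (rewrite <- (rs_ode _ _ _ _ _ _ _ Hu r Hr); ring).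
    replace (D * gam ^ 2 * - (lam * h r * f (u r))) with (- (D * gam ^ 2 * lam) * h r * f (u r))
      by ring.
    rewrite Hscale. unfold F. field. lra. }
  rewrite Hres.
  assert (Hh' : Rabs (h r / h 0 * F - F) <= th).
  { replace (h r / h 0 * F - F) with ((h r / h 0 - 1) * F) by ring.
    rewrite Rabs_mult, (Rabs_pos_eq F) by lra. pose proof (Rabs_pos (h r / h 0 - 1)). nra. }
  assert (Hexp : Rabs (exp (D * (u r - mu)) - exp (z0 s)) <= Rabs (D * (u r - mu) - z0 s)).
  { apply exp_lipschitz_nonpos; [nra | apply z0_nonpos]. }
  specialize (Happrox (u r) Hur). fold F in Happrox.
  replace (- (h r / h 0 * F) + exp (z0 s))
    with (- ((h r / h 0 * F - F) + (F - exp (D * (u r - mu))) + (exp (D * (u r - mu)) - exp (z0 s))))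
    by ring.
  rewrite Rabs_Ropp. eapply Rle_trans; [apply Rabs_triang|].
  eapply Rle_trans; [apply Rplus_le_compat_r, Rabs_triang|]. lra.
Qed.

Lemma rescaled_errors_regular R1 :
  0 < R1 -> gam * R1 <= 1 ->
  cont_Icc 0 R1 (fun s => w s) /\ cont_Icc 0 R1 (fun s => w1 s) /\
  cont_Icc 0 R1 (fun s => w2 s) /\
  (forall s, 0 < s < R1 -> is_derive (fun s => w s) s (w1 s)) /\
  (forall s, 0 < s < R1 -> is_derive (fun s => w1 s) s (w2 s)).
Proof.
  intros HR1 HgR. pose proof (gamma0_pos _ _ _ _ scale_factor_pos) as Hg.
  assert (Hin : forall s, 0 < s < R1 -> 0 < gam * s < 1) by (intros x Hx; split; nra).
  assert (Hz : forall z, (forall x, continuity_pt z x) -> cont_Icc 0 R1 z)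
    by (intros; apply cont_Icc_of_continuity; [lra | auto]).
  split; [|split; [|split; [|split]]].
  - apply cont_Icc_minus; [|apply Hz, continuity_z0].
    apply cont_Icc_mult; [apply cont_Icc_const|]. apply cont_Icc_minus; [|apply cont_Icc_const].
    apply cont_Icc_rescale; auto; [lra | apply (sol_cont_u Hu)].
  - apply cont_Icc_minus; [|apply Hz, continuity_z1].
    apply cont_Icc_mult; [apply cont_Icc_const|].
    apply cont_Icc_rescale; auto; [lra | apply (sol_cont_du Hu)].
  - apply cont_Icc_minus; [|apply Hz, continuity_z2].
    apply cont_Icc_mult; [apply cont_Icc_const|].
    apply cont_Icc_rescale; auto; [lra | apply (sol_cont_d2u Hu)].
  - intros x Hx. apply (is_derive_minus _ z0); [|apply is_derive_z0].
    replace (D * gam * du (gam * x)) with (D * (gam * du (gam * x) - 0)) by ring.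
    apply (is_derive_scal (fun y => u (gam * y) - mu)), (is_derive_minus _ (fun _ => mu));
      [|exact (is_derive_const mu x)].
    apply is_derive_rescale, (sol_is_derive_u Hu), Hin; auto.
  - intros x Hx. apply (is_derive_minus _ z1); [|apply is_derive_z1].
    replace (D * gam ^ 2 * d2u (gam * x)) with (D * gam * (gam * d2u (gam * x))) by ring.
    apply (is_derive_scal (fun y => du (gam * y))).
    apply is_derive_rescale, (sol_is_derive_du Hu), Hin; auto.
Qed.

(* The radial Gronwall estimate is applied on [[0, R0 + 1]] so that [[0, R0]]
   lies inside, where the bound on [w2] is available. *)
Lemma rescaled_C2_estimate R0 th :
  0 < R0 -> 0 <= th ->
  (forall v, 0 <= v <= mu -> f v <= f mu) ->
  (forall v, 0 <= v <= mu -> Rabs (f v / f mu - exp (D * (v - mu))) <= th) ->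
  gam * (R0 + 1) <= 1 ->
  (forall r, 0 <= r <= gam * (R0 + 1) -> Rabs (h r / h 0 - 1) <= th) ->
  forall s, 0 <= s <= R0 ->
    Rabs (w s) <= 4 * (gronwall_const (R0 + 1) + 1) * th /\
    Rabs (w1 s) <= 4 * (gronwall_const (R0 + 1) + 1) * th /\
    Rabs (w2 s) <= 4 * (gronwall_const (R0 + 1) + 1) * th.
Proof.
  intros HR0 Hth Hmono Happrox HgR Hhclose s Hs.
  pose proof (gamma0_pos _ _ _ _ scale_factor_pos) as Hg.
  set (R1 := R0 + 1) in *. assert (HR1 : 0 < R1) by (unfold R1; lra).
  destruct (rescaled_errors_regular R1 HR1 HgR) as [Hw [Hw1 [Hw2 [Dw Dw1]]]].
  destruct (rs_bc _ _ _ _ _ _ _ Hu) as [Hu0 [Hdu0 _]].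
  assert (Hw_0 : w 0 = 0) by (rewrite Rmult_0_r, Hu0, z0_0; ring).
  assert (Hw1_0 : w1 0 = 0) by (rewrite Rmult_0_r, Hdu0, z1_0; ring).
  assert (Hres : forall s, 0 < s < R1 -> Rabs (w2 s + w1 s / s) <= Rabs (w s) + 2 * th).
  { intros x Hx. assert (0 < gam * x < 1) by (split; nra).
    apply rescaled_residual; auto. apply Hhclose. nra. }
  pose proof (gronwall_const_nonneg R1 ltac:(lra)).
  pose proof (radial_gronwall R1 (fun s => w s) (fun s => w1 s) (fun s => w2 s) HR1 Hw Hw1
    Hw_0 Hw1_0 Dw Dw1 (2 * th) ltac:(lra) Hres s ltac:(unfold R1; lra)).
  pose proof (Rabs_pos (w s)). pose proof (Rabs_pos (w1 s)).
  split; [nra|]. split; [nra|].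
  assert (Hw2_int : forall s, 0 < s < R1 -> Rabs (w2 s) <= 4 * (gronwall_const R1 + 1) * th).
  { intros x Hx. replace (4 * (gronwall_const R1 + 1) * th)
      with (2 * (gronwall_const R1 + 1) * (2 * th)) by ring.
    exact (radial_gronwall_second_derivative R1 (fun s => w s) (fun s => w1 s) (fun s => w2 s)
      HR1 Hw Hw1 Hw_0 Hw1_0 Dw Dw1 (2 * th) ltac:(lra) Hres x Hx). }
  destruct (Req_dec s 0) as [->|Hs0]; [|apply Hw2_int; unfold R1; lra].
  rewrite <- (clamp_id 0 R1 0) by lra.
  apply (Rabs_le_at_0_of_continuity (fun y => w2 (clamp 0 R1 y)) R1); auto.
  intros y Hy. rewrite clamp_id by lra. apply Hw2_int; auto.
Qed.

Lemma rescaled_flux R0 :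
  0 <= gam * R0 <= 1 ->
  D * RInt (fun r => lam * h r * f (u r) * r) 0 (gam * R0) - (4 - 32 / (8 + R0 ^ 2))
  = - R0 * (D * gam * du (gam * R0) - z1 R0).
Proof. intro. rewrite (sol_flux_identity Hh_cont Hh_pos (f_nonneg Hf) (f_cont Hf) Hu), <- z1_flux by auto. ring. Qed.

(* [f'(u) = g'(u) f(u)] and [g'(u) ~ g'(mu)] as long as [g'(mu) (mu - u)]
   stays bounded. *)
Lemma df_mass_close e T Mz rho :
  (forall t, T <= t -> d2g t <= e * dg t ^ 2) -> t0 < T -> 0 <= e -> 0 <= Mz ->
  0 <= rho <= 1 -> T <= u rho -> D * (mu - u rho) <= Mz ->
  Rabs (RInt (fun r => lam * h r * df (u r) * r) 0 rho
        - D * RInt (fun r => lam * h r * f (u r) * r) 0 rho)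
  <= e * Mz * (D * RInt (fun r => lam * h r * f (u r) * r) 0 rho).
Proof.
  intros Hsmall HT He HMz Hrho HTu Hgap.
  pose proof (dg_pos Hf mu ltac:(lra)) as HD. pose proof (t0_nonneg Hf).
  set (I := fun r => lam * h r * f (u r) * r).
  set (c := 1 / (1 + e * Mz)).
  assert (Hc : 0 <= 1 - c <= e * Mz).
  { unfold c. replace (1 - 1 / (1 + e * Mz)) with (e * Mz / (1 + e * Mz)) by (field; nra).
    split; [apply Rdiv_le_0_compat; nra|].
    apply Rmult_le_reg_r with (1 + e * Mz); [nra|]. unfold Rdiv.
    rewrite Rmult_assoc, Rinv_l by nra. nra. }
  assert (Hpt : forall r, 0 < r < rho -> c * D * I r <= lam * h r * df (u r) * r <= D * I r).
  { intros r Hr.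
    pose proof (sol_u_nonincreasing Hh_pos (f_nonneg Hf) Hu r rho ltac:(lra) ltac:(lra) ltac:(lra)).
    pose proof (sol_u_le_mu Hh_pos (f_nonneg Hf) Hu r ltac:(lra)).
    assert (Hdg : c * D <= dg (u r) <= D).
    { split; [|apply (dg_nondecreasing Hf); lra].
      replace (c * D) with (D / (1 + e * Mz)) by (unfold c; field; nra).
      apply (dg_near_lower_bound Hf e T Mz); auto; nra. }
    assert (HIr : 0 <= I r) by (apply (sol_source_nonneg Hh_pos (f_nonneg Hf) Hu); lra).
    replace (lam * h r * df (u r) * r) with (dg (u r) * I r)
      by (unfold I; rewrite (df_eq_dg_mul_f Hf) by lra; ring).
    split; apply Rmult_le_compat_r; lra. }
  pose proof (RInt_between_scaled I _ 0 rho (c * D) D ltac:(lra)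
    (sol_ex_RInt_weighted Hh_cont Hh_pos (f_nonneg Hf) Hu f rho
       ltac:(apply (cont_Icc_f Hf); lra) Hrho)
    (sol_ex_RInt_weighted Hh_cont Hh_pos (f_nonneg Hf) Hu df rho
       ltac:(apply (cont_Icc_df Hf); lra) Hrho) Hpt) as [Hlo Hup].
  assert (HDI : 0 <= D * RInt I 0 rho).
  { apply Rmult_le_pos; [lra|]. apply RInt_ge_0; [lra | |].
    - apply (sol_ex_RInt_weighted Hh_cont Hh_pos (f_nonneg Hf) Hu); auto.
      apply (cont_Icc_f Hf); lra.
    - intros x Hx. apply (sol_source_nonneg Hh_pos (f_nonneg Hf) Hu); lra. }
  assert ((1 - c) * (D * RInt I 0 rho) <= e * Mz * (D * RInt I 0 rho))
    by (apply Rmult_le_compat_r; lra).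
  assert (0 <= e * Mz * (D * RInt I 0 rho)) by (apply Rmult_le_pos; nra).
  replace (c * D * RInt I 0 rho) with (D * RInt I 0 rho - (1 - c) * (D * RInt I 0 rho))
    in Hlo by ring.
  apply Rabs_le. lra.
Qed.

Lemma scale_factor_ge_mu Hmax :
  (forall r, 0 <= r <= 1 -> h r <= Hmax) ->
  (forall v, 0 <= v <= mu -> f v <= f mu) -> t0 + 1 <= mu ->
  2 * h 0 * dg (t0 + 1) * mu <= Hmax * (lam * h 0 * df mu).
Proof.
  intros HH Hmono Hmu1.
  pose proof (rs_lam_pos _ _ _ _ _ _ _ Hu). pose proof (rs_mu_pos _ _ _ _ _ _ _ Hu).
  pose proof (Hh_pos 0 ltac:(lra)). pose proof (t0_nonneg Hf).
  pose proof (dg_pos Hf (t0 + 1) ltac:(lra)). pose proof (f_pos Hf mu ltac:(lra)).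
  assert (Hd1 : dg (t0 + 1) <= D) by (apply (dg_nondecreasing Hf); lra).
  assert (Hmu_le : mu <= lam * Hmax * f mu / 2).
  { apply (sol_mu_le_half_sup Hh_pos (f_nonneg Hf) Hu). intros r Hr.
    pose proof (HH r Hr). pose proof (Hh_pos r Hr).
    pose proof (sol_u_nonneg Hu r Hr). pose proof (sol_u_le_mu Hh_pos (f_nonneg Hf) Hu r Hr).
    pose proof (Hmono (u r) ltac:(lra)). pose proof (f_nonneg Hf (u r) ltac:(lra)).
    apply Rmult_le_compat; nra. }
  rewrite (df_eq_dg_mul_f Hf mu Hmu).
  assert (h 0 * dg (t0 + 1) * (2 * mu) <= h 0 * D * (2 * mu))
    by (apply Rmult_le_compat_r; [lra | apply Rmult_le_compat_l; lra]).
  assert (h 0 * D * (2 * mu) <= h 0 * D * (lam * Hmax * f mu))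
    by (apply Rmult_le_compat_l; nra).
  replace (Hmax * (lam * h 0 * (D * f mu))) with (h 0 * D * (lam * Hmax * f mu)) by ring.
  lra.
Qed.

(* [|z0 R0| + 1] bounds [g'(mu) (u(rho) - mu)] at the edge [rho = gam R0]. *)
Lemma edge_estimates R0 tau e T :
  1 <= R0 -> 0 < tau <= 1 -> 0 <= e -> gam * R0 <= 1 ->
  Rabs (D * (u (gam * R0) - mu) - z0 R0) <= 1 ->
  Rabs (D * gam * du (gam * R0) - z1 R0) <= tau / R0 ->
  (forall t, T <= t -> d2g t <= e * dg t ^ 2) -> t0 < T ->
  e * (Rabs (z0 R0) + 1) * 5 <= tau ->
  (Rabs (z0 R0) + 1) / tau <= D * mu -> T + (Rabs (z0 R0) + 1) / D <= mu ->
  Rabs (u (gam * R0) / mu - 1) <= tau /\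
  Rabs (D * RInt (fun r => lam * h r * f (u r) * r) 0 (gam * R0)
        - (4 - 32 / (8 + R0 ^ 2))) <= tau /\
  Rabs (RInt (fun r => lam * h r * df (u r) * r) 0 (gam * R0)
        - D * RInt (fun r => lam * h r * f (u r) * r) 0 (gam * R0)) <= tau.
Proof.
  intros HR0 Htau He HgR Hw Hw1 Hsmall HT He5 HDmu HTmu.
  set (Mz := Rabs (z0 R0) + 1) in *.
  pose proof (gamma0_pos _ _ _ _ scale_factor_pos) as Hg.
  pose proof (dg_pos Hf mu ltac:(lra)) as HD. pose proof (rs_mu_pos _ _ _ _ _ _ _ Hu).
  assert (Hrho : 0 <= gam * R0 <= 1) by (split; nra).
  assert (Hgap : Rabs (D * (u (gam * R0) - mu)) <= Mz).
  { pose proof (Rabs_triang (D * (u (gam * R0) - mu) - z0 R0) (z0 R0)).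
    replace (D * (u (gam * R0) - mu) - z0 R0 + z0 R0) with (D * (u (gam * R0) - mu)) in * by ring.
    unfold Mz. lra. }
  assert (Hflux : Rabs (D * RInt (fun r => lam * h r * f (u r) * r) 0 (gam * R0)
                        - (4 - 32 / (8 + R0 ^ 2))) <= tau).
  { rewrite rescaled_flux by auto. rewrite Rabs_mult, Rabs_Ropp, Rabs_pos_eq by lra.
    apply Rmult_le_compat_l with (r := R0) in Hw1; [|lra].
    replace (R0 * (tau / R0)) with tau in Hw1 by (field; lra). lra. }
  split; [apply (Rabs_div_sub_1_le _ _ D Mz); lra|].
  split; [exact Hflux|].
  assert (HMzD : D * (mu - u (gam * R0)) <= Mz).
  { apply Rabs_le_between in Hgap. lra. }
  assert (HTu : T <= u (gam * R0)).
  { assert (mu - u (gam * R0) <= Mz / D); [|lra].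
    apply Rmult_le_reg_l with D; [lra|]. replace (D * (Mz / D)) with Mz by (field; lra). lra. }
  assert (HMz : 0 <= Mz) by (unfold Mz; pose proof (Rabs_pos (z0 R0)); lra).
  eapply Rle_trans; [apply (df_mass_close e T Mz); auto|].
  assert (0 < 32 / (8 + R0 ^ 2)) by (apply Rdiv_lt_0_compat; [lra | apply z_denom_pos]).
  apply Rabs_le_between in Hflux.
  eapply Rle_trans; [|apply He5]. apply Rmult_le_compat_l; [nra | lra].
Qed.

End Rescaling.

(** * The blow-up sequence *)

Section BlowUpSequence.

Context {h f df dg d2g : R -> R} {t0 q : R} {lam mu : nat -> R} {u du d2u : nat -> R -> R}.
Hypothesis Hf : admissible_nonlinearity f df dg d2g t0 q.
Hypothesis Hh_cont : cont_Icc 0 1 h.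
Hypothesis Hh_pos : forall r, 0 <= r <= 1 -> 0 < h r.
Hypothesis Hu : forall n, radial_solution h f (lam n) (mu n) (u n) (du n) (d2u n).
Hypothesis Hmu : is_lim_seq mu p_infty.

Local Notation gam n := (gamma0 (lam n) h df (mu n)).

Lemma mu_eventually_gt M : exists N, forall n, (N <= n)%nat -> M < mu n.
Proof. apply is_lim_seq_spec in Hmu. destruct (Hmu M) as [N HN]. exists N. auto. Qed.

(* [mu <= lam sup(h) f(mu) / 2] makes [gam^-2 = lam h(0) g'(mu) f(mu)]
   grow at least linearly in [mu]. *)
Lemma gamma0_eventually_lt eps :
  0 < eps -> exists N, forall n, (N <= n)%nat -> 0 < gam n < eps.
Proof.
  intro He. pose proof (t0_nonneg Hf). pose proof (Hh_pos 0 ltac:(lra)) as Hh0.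
  destruct (continuity_ab_maj (fun y => h (clamp 0 1 y)) 0 1) as [m [Hm _]];
    [lra | intros; apply Hh_cont |].
  set (Hmax := h (clamp 0 1 m)).
  assert (HH : forall r, 0 <= r <= 1 -> h r <= Hmax).
  { intros r Hr. specialize (Hm r Hr). rewrite clamp_id in Hm; auto. }
  assert (HHp : 0 < Hmax) by (pose proof (HH 0 ltac:(lra)); lra).
  destruct (f_ratio_exp_approx Hf 1 ltac:(lra)) as [T [HT Happrox]].
  pose proof (dg_pos Hf (t0 + 1) ltac:(lra)) as Hd1.
  set (c := 2 * h 0 * dg (t0 + 1)).
  assert (Hc : 0 < c) by (unfold c; nra).
  destruct (mu_eventually_gt (Rmax T (Hmax / (c * (eps * eps))))) as [N HN].
  exists N. intros n Hn. specialize (HN n Hn).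
  pose proof (Rmax_l T (Hmax / (c * (eps * eps)))).
  pose proof (Rmax_r T (Hmax / (c * (eps * eps)))).
  set (X := lam n * h 0 * df (mu n)).
  assert (HX : 0 < X) by (apply (scale_factor_pos Hf Hh_pos (Hu n)); lra).
  assert (HcX : c * mu n <= Hmax * X).
  { apply (scale_factor_ge_mu Hf Hh_pos (Hu n)); auto; try lra. apply Happrox; lra. }
  assert (Hce : 0 < c * (eps * eps)) by (apply Rmult_lt_0_compat; nra).
  assert (Hlt : Hmax < c * (eps * eps) * mu n).
  { replace Hmax with (c * (eps * eps) * (Hmax / (c * (eps * eps)))) at 1 by (field; lra).
    apply Rmult_lt_compat_l; lra. }
  assert (Hbig : 1 < eps * eps * X).
  { assert (c * (eps * eps) * mu n <= Hmax * (eps * eps * X)).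
    { replace (c * (eps * eps) * mu n) with (eps * eps * (c * mu n)) by ring.
      replace (Hmax * (eps * eps * X)) with (eps * eps * (Hmax * X)) by ring.
      apply Rmult_le_compat_l; nra. }
    apply Rmult_lt_reg_l with Hmax; lra. }
  pose proof (gamma0_pos _ _ _ _ HX) as Hg. split; auto.
  pose proof (gamma0_sq _ _ _ _ HX) as Hg2. fold X in Hg2.
  assert (Hsq : gam n ^ 2 < eps * eps).
  { apply Rmult_lt_reg_r with X; auto. rewrite Hg2, Rinv_l by lra. lra. }
  destruct (Rlt_or_le (gam n) eps) as [|Hge]; auto.
  assert (eps * eps <= gam n * gam n) by (apply Rmult_le_compat; lra). simpl in Hsq. lra.
Qed.

Lemma gamma0_tends_to_0 : is_lim_seq (fun n => gam n) 0.
Proof.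
  apply is_lim_seq_spec. intro eps.
  destruct (gamma0_eventually_lt eps (cond_pos eps)) as [N HN]. exists N.
  intros n Hn. specialize (HN n Hn). rewrite Rminus_0_r, Rabs_pos_eq; lra.
Qed.

Lemma eventually_C2_close R0 th c M :
  0 < R0 -> 0 < th <= 1 -> 0 < c <= 1 -> exists N, forall n, (N <= n)%nat ->
  M < mu n /\ 0 < gam n /\ gam n * (R0 + 1) < c /\
  (forall s, 0 <= s <= R0 ->
    Rabs (dg (mu n) * (u n (gam n * s) - mu n) - z0 s) <= 4 * (gronwall_const (R0 + 1) + 1) * th /\
    Rabs (dg (mu n) * gam n * du n (gam n * s) - z1 s) <= 4 * (gronwall_const (R0 + 1) + 1) * th /\
    Rabs (dg (mu n) * gam n ^ 2 * d2u n (gam n * s) - z2 s)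
      <= 4 * (gronwall_const (R0 + 1) + 1) * th).
Proof.
  intros HR0 Hth Hc. pose proof (t0_nonneg Hf). pose proof (Hh_pos 0 ltac:(lra)) as Hh0.
  destruct (f_ratio_exp_approx Hf th Hth) as [T [HT Happrox]].
  destruct (ratio_close_near_0 h th Hh_cont Hh0 ltac:(lra)) as [d [Hd Hhclose]].
  pose proof (Rmin_l d c). pose proof (Rmin_r d c).
  destruct (gamma0_eventually_lt (Rmin d c / (R0 + 1))) as [N1 HN1].
  { apply Rdiv_lt_0_compat; [apply Rmin_pos|]; lra. }
  destruct (mu_eventually_gt (Rmax T M)) as [N2 HN2].
  exists (Nat.max N1 N2). intros n Hn.
  destruct (HN1 n ltac:(lia)) as [Hg0 Hgs]. specialize (HN2 n ltac:(lia)).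
  pose proof (Rmax_l T M). pose proof (Rmax_r T M).
  assert (HgR1 : gam n * (R0 + 1) < Rmin d c).
  { apply Rmult_lt_reg_r with (/ (R0 + 1)); [apply Rinv_0_lt_compat; lra|].
    rewrite Rmult_assoc, Rinv_r, Rmult_1_r by lra. exact Hgs. }
  destruct (Happrox (mu n) ltac:(lra)) as [Hmono Hclose].
  repeat split; try lra.
  all: apply (rescaled_C2_estimate Hf Hh_pos (Hu n)); auto; try lra.
  all: intros r Hr; apply Hhclose; lra.
Qed.

Lemma eventual_blow_up_estimates R0 tau :
  1 <= R0 -> 0 < tau <= 1 -> exists N, forall n, (N <= n)%nat ->
  0 < gam n /\ gam n * R0 < tau /\
  (forall s, 0 <= s <= R0 ->
    Rabs (dg (mu n) * (u n (gam n * s) - mu n) - z0 s) <= tau /\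
    Rabs (dg (mu n) * gam n * du n (gam n * s) - z1 s) <= tau /\
    Rabs (dg (mu n) * gam n ^ 2 * d2u n (gam n * s) - z2 s) <= tau) /\
  Rabs (u n (gam n * R0) / mu n - 1) <= tau /\
  Rabs (dg (mu n) * RInt (fun r => lam n * h r * f (u n r) * r) 0 (gam n * R0)
        - (4 - 32 / (8 + R0 ^ 2))) <= tau /\
  Rabs (RInt (fun r => lam n * h r * df (u n r) * r) 0 (gam n * R0)
        - dg (mu n) * RInt (fun r => lam n * h r * f (u n r) * r) 0 (gam n * R0)) <= tau.
Proof.
  intros HR0 Htau. pose proof (t0_nonneg Hf).
  set (Mz := Rabs (z0 R0) + 1).
  assert (HMz : 1 <= Mz) by (unfold Mz; pose proof (Rabs_pos (z0 R0)); lra).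
  set (K := 4 * (gronwall_const (R0 + 1) + 1)).
  assert (HK : 4 <= K) by (unfold K; pose proof (gronwall_const_nonneg (R0 + 1) ltac:(lra)); lra).
  set (th := tau / (K * R0)).
  assert (HKth : K * th = tau / R0) by (unfold th; field; lra).
  assert (Hth : 0 < th <= 1).
  { unfold th. split; [apply Rdiv_lt_0_compat; nra|].
    apply Rmult_le_reg_r with (K * R0); [nra|].
    unfold Rdiv. rewrite Rmult_assoc, Rinv_l by nra. nra. }
  assert (HtR : 0 < tau / R0 <= tau).
  { split; [apply Rdiv_lt_0_compat; lra|].
    apply Rmult_le_reg_r with R0; [lra|]. unfold Rdiv. rewrite Rmult_assoc, Rinv_l by lra. nra. }
  set (e := tau / (5 * Mz)).
  assert (He : 0 < e) by (unfold e; apply Rdiv_lt_0_compat; lra).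
  assert (He5 : e * Mz * 5 = tau) by (unfold e; field; lra).
  destruct (d2g_little_o Hf e He) as [T [HT Hsmall]].
  pose proof (dg_pos Hf (t0 + 1) ltac:(lra)) as Hd1.
  set (M := Rmax (T + Mz / dg (t0 + 1)) (Mz / (tau * dg (t0 + 1)))).
  pose proof (Rmax_l (T + Mz / dg (t0 + 1)) (Mz / (tau * dg (t0 + 1)))).
  pose proof (Rmax_r (T + Mz / dg (t0 + 1)) (Mz / (tau * dg (t0 + 1)))).
  destruct (eventually_C2_close R0 th tau M) as [N HN]; try lra.
  exists N. intros n Hn. destruct (HN n Hn) as [HmuM [Hg0 [HgR HC2]]].
  fold K in HC2. rewrite HKth in HC2.
  split; [lra|]. split; [nra|].
  split; [intros s Hs; destruct (HC2 s Hs) as [A1 [A2 A3]]; repeat split; lra|].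
  destruct (HC2 R0 ltac:(lra)) as [B1 [B2 _]].
  assert (Hmun : t0 + 1 <= mu n).
  { assert (0 <= Mz / dg (t0 + 1)) by (apply Rdiv_le_0_compat; lra). unfold M in *. lra. }
  pose proof (dg_nondecreasing Hf (t0 + 1) (mu n) ltac:(lra) Hmun) as HD.
  apply (edge_estimates Hf Hh_cont Hh_pos (Hu n) ltac:(lra) R0 tau e T); auto; try lra;
    fold Mz.
  - rewrite He5. lra.
  - apply Rle_trans with (dg (t0 + 1) * mu n); [|apply Rmult_le_compat_r; lra].
    apply Rmult_le_reg_l with (/ dg (t0 + 1)); [apply Rinv_0_lt_compat; lra|].
    rewrite <- Rmult_assoc, Rinv_l, Rmult_1_l by lra.
    replace (/ dg (t0 + 1) * (Mz / tau)) with (Mz / (tau * dg (t0 + 1))) by (field; lra).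
    unfold M in *. lra.
  - assert (Mz / dg (mu n) <= Mz / dg (t0 + 1)); [|unfold M in *; lra].
    unfold Rdiv. apply Rmult_le_compat_l; [lra|]. apply Rinv_le_contravar; lra.
Qed.

End BlowUpSequence.

Fixpoint diagonal (N : nat -> nat) (k : nat) : nat :=
  match k with
  | O => N O
  | S k' => Nat.max (S (diagonal N k')) (N (S k'))
  end.

Lemma diagonal_subsequence (P : nat -> nat -> Prop) :
  (forall k, exists N, forall n, (N <= n)%nat -> P k n) ->
  exists phi : nat -> nat, (forall k, (phi k < phi (S k))%nat) /\ forall k, P k (phi k).
Proof.
  intro H.
  set (N := fun k => proj1_sig (constructive_indefinite_description _ (H k))).
  assert (HN : forall k n, (N k <= n)%nat -> P k n)
    by (intro k; exact (proj2_sig (constructive_indefinite_description _ (H k)))).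
  clearbody N. exists (diagonal N). split.
  - intro k. cbn [diagonal]. lia.
  - intro k. apply HN. destruct k; cbn [diagonal]; lia.
Qed.

Lemma is_lim_seq_INR_succ : is_lim_seq (fun k => INR k + 1) p_infty.
Proof. apply is_lim_seq_le_p_loc with INR; [exists 0%nat; intros; lra | apply is_lim_seq_INR]. Qed.

Lemma is_lim_seq_of_rate (x : nat -> R) l c :
  (forall k, Rabs (x k - l) <= c / (INR k + 1)) -> is_lim_seq x l.
Proof.
  intro H.
  assert (Hrate : is_lim_seq (fun k => c / (INR k + 1)) 0).
  { replace (Finite 0) with (Rbar_mult c 0) by (simpl; f_equal; ring).
    apply is_lim_seq_scal_l.
    replace (Finite 0) with (Rbar_inv p_infty) by reflexivity.
    apply is_lim_seq_inv; [apply is_lim_seq_INR_succ | discriminate]. }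
  apply is_lim_seq_spec. intro eps. apply is_lim_seq_spec in Hrate.
  destruct (Hrate eps) as [N HN]. exists N. intros n Hn.
  specialize (HN n Hn). specialize (H n). rewrite Rminus_0_r in HN.
  pose proof (Rle_abs (c / (INR n + 1))). lra.
Qed.

Lemma admissible_of_H1 (f df dg d2g : R -> R) t0 :
  C1_on (Ici 0) f df -> (forall t, 0 <= t -> 0 <= f t) -> 0 <= t0 ->
  (forall t, t0 <= t -> 0 < f t) -> C2_on (Ici t0) (fun t => ln (f t)) dg d2g ->
  H1 t0 f (fun t => ln (f t)) dg d2g -> exists q, admissible_nonlinearity f df dg d2g t0 q.
Proof.
  intros [Hcf [Hdf Hcdf]] Hf0 Ht0 Hfpos [[Hcg [Hdg Hcdg]] [_ [Hd2g _]]] [Hpos [q [p [Hqp [Hlim _]]]]].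
  exists q. constructor; auto. destruct Hqp as [[-> _] | [? _]]; lra.
Qed.

Lemma eventual_estimates_at_level (h f df dg d2g : R -> R) t0 q
  (lam mu : nat -> R) (u du d2u : nat -> R -> R) :
  admissible_nonlinearity f df dg d2g t0 q -> cont_Icc 0 1 h ->
  (forall r, 0 <= r <= 1 -> 0 < h r) ->
  (forall n, radial_solution h f (lam n) (mu n) (u n) (du n) (d2u n)) ->
  is_lim_seq mu p_infty ->
  forall k, exists N, forall n, (N <= n)%nat ->
    let g := gamma0 (lam n) h df (mu n) in let R0 := INR k + 1 in
    0 < g /\ g * R0 < / R0 /\
    (forall s, 0 <= s <= R0 ->
      Rabs (dg (mu n) * (u n (g * s) - mu n) - z0 s) <= / R0 /\
      Rabs (dg (mu n) * g * du n (g * s) - Derive z0 s) <= / R0 /\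
      Rabs (dg (mu n) * g ^ 2 * d2u n (g * s) - Derive (Derive z0) s) <= / R0) /\
    Rabs (u n (g * R0) / mu n - 1) <= 1 / R0 /\
    Rabs (dg (mu n) * RInt (fun r => lam n * h r * f (u n r) * r) 0 (g * R0) - 4) <= 33 / R0 /\
    Rabs (RInt (fun r => lam n * h r * df (u n r) * r) 0 (g * R0) - 4) <= 34 / R0.
Proof.
  intros Hf Hh_cont Hh_pos Hu Hmu k.
  pose proof (pos_INR k) as Hk.
  destruct (eventual_blow_up_estimates Hf Hh_cont Hh_pos Hu Hmu (INR k + 1) (/ (INR k + 1)))
    as [N HN]; [lra | split; [apply Rinv_0_lt_compat; lra | rewrite <- Rinv_1; apply Rinv_le_contravar; lra] |].
  exists N. intros n Hn. cbv zeta.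
  destruct (HN n Hn) as [Hg [HgR [HC2 [Hratio [Hmass Hdf]]]]].
  set (R0 := INR k + 1) in *. assert (HR0pos : 0 < R0) by (unfold R0; lra).
  assert (H32 : 0 < 32 / (8 + R0 ^ 2) <= 32 / R0).
  { split; [apply Rdiv_lt_0_compat; [lra | apply z_denom_pos]|].
    unfold Rdiv. apply Rmult_le_compat_l; [lra|]. apply Rinv_le_contravar; unfold R0; nra. }
  assert (HR0 : / R0 = 1 / R0) by (unfold Rdiv; ring).
  split; [exact Hg|]. split; [exact HgR|].
  split; [intros s Hs; rewrite Derive_z0, Derive_Derive_z0; apply HC2; auto|].
  split; [rewrite <- HR0; exact Hratio|].
  apply Rabs_le_between in Hmass. apply Rabs_le_between in Hdf. split; apply Rabs_le.
  - replace (33 / R0) with (/ R0 + 32 / R0) by (field; lra). lra.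
  - replace (34 / R0) with (/ R0 + / R0 + 32 / R0) by (field; lra). lra.
Qed.

Theorem theorem1p1
  (h dh f df d2f : R -> R) (t0 : R) (dg d2g : R -> R)
  (lam mu : nat -> R) (u du d2u : nat -> R -> R) :
  (* h : [0,1] -> (0,oo) continuously differentiable *)
  C1_on (Icc 0 1) h dh ->
  (forall r, 0 <= r <= 1 -> 0 < h r) ->
  (* f : [0,oo) -> [0,oo) continuously differentiable *)
  C1_on (Ici 0) f df ->
  (forall t, 0 <= t -> 0 <= f t) ->
  (* t0 >= 0, f > 0 on [t0,oo), f in C^2([t0,oo)) *)
  0 <= t0 ->
  (forall t, t0 <= t -> 0 < f t) ->
  C2_on (Ici t0) f df d2f ->
  (* g = log f on [t0,oo), with g' = dg and g'' = d2g *)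
  C2_on (Ici t0) (fun t => ln (f t)) dg d2g ->
  H1 t0 f (fun t => ln (f t)) dg d2g ->
  (* the solutions (lam_n, mu_n, u_n) *)
  (forall n, 0 < lam n) ->
  (forall n, 0 < mu n) ->
  (forall n, C2_on (Icc 0 1) (u n) (du n) (d2u n)) ->
  (forall n r, 0 < r < 1 ->
     - d2u n r - / r * du n r = lam n * h r * f (u n r)) ->
  (forall n r, 0 < r < 1 -> 0 < u n r) ->
  (forall n, u n 0 = mu n /\ du n 0 = 0 /\ u n 1 = 0) ->
  is_lim_seq mu p_infty ->
  let gam := fun n => / sqrt (lam n * h 0 * df (mu n)) in
  is_lim_seq gam 0 /\
  exists (phi : nat -> nat) (rho : nat -> R),
    (forall n, (phi n < phi (S n))%nat) /\
    (forall n, 0 < rho n < 1) /\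
    is_lim_seq (fun n => u (phi n) (rho n) / mu (phi n)) 1 /\
    is_lim_seq rho 0 /\
    is_lim_seq (fun n => rho n / gam (phi n)) p_infty /\
    (* || z_{0,n} - z_0 ||_{C^2([0, rho_n / gam_n])} -> 0, where
       z_{0,n}(r) = g'(mu_n) (u_n(gam_n r) - mu_n) *)
    (exists eps : nat -> R,
       is_lim_seq eps 0 /\
       forall n r, 0 <= r <= rho n / gam (phi n) ->
         let m := phi n in
         Rabs (dg (mu m) * (u m (gam m * r) - mu m) - z0 r) <= eps n /\
         Rabs (dg (mu m) * gam m * du m (gam m * r) - Derive z0 r) <= eps n /\
         Rabs (dg (mu m) * gam m ^ 2 * d2u m (gam m * r)
               - Derive (Derive z0) r) <= eps n) /\
    is_lim_seq (fun n => let m := phi n in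
       dg (mu m) * RInt (fun r => lam m * h r * f (u m r) * r) 0 (rho n)) 4 /\
    is_lim_seq (fun n => let m := phi n in
       RInt (fun r => lam m * h r * df (u m r) * r) 0 (rho n)) 4.
Proof.
  intros Hh1 Hhpos Hf1 Hf0 Ht0 Hfpos _ Hg2 HH1 Hlam Hmu Hu2 Hode Hupos Hbc Hmulim gam.
  destruct (admissible_of_H1 f df dg d2g t0 Hf1 Hf0 Ht0 Hfpos Hg2 HH1) as [q Hf].
  assert (Hh : cont_Icc 0 1 h) by (apply cont_Icc_of_Icc; [lra | apply Hh1]).
  assert (Hu : forall n, radial_solution h f (lam n) (mu n) (u n) (du n) (d2u n))
    by (intro n; constructor; auto).
  split; [exact (gamma0_tends_to_0 Hf Hh Hhpos Hu Hmulim)|].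
  destruct (diagonal_subsequence _ (eventual_estimates_at_level h f df dg d2g t0 q lam mu u du d2u
    Hf Hh Hhpos Hu Hmulim)) as [phi [Hphi Hgood]].
  cbv beta zeta in Hgood. unfold gamma0 in Hgood.
  exists phi, (fun k => gam (phi k) * (INR k + 1)). unfold gam. cbv beta.
  assert (Hdiv : forall x y, 0 < x -> x * y / x = y) by (intros; field; lra).
  split; [exact Hphi|]. split.
  { intro k. destruct (Hgood k) as [Hg [HgR _]]. pose proof (pos_INR k).
    assert (/ (INR k + 1) <= 1) by (rewrite <- Rinv_1; apply Rinv_le_contravar; lra). split; nra. }
  split; [apply is_lim_seq_of_rate with 1; intro k; apply Hgood|].
  split.
  { apply is_lim_seq_of_rate with 1. intro k. destruct (Hgood k) as [Hg [HgR _]].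
    pose proof (pos_INR k). rewrite Rminus_0_r, Rabs_pos_eq by nra. unfold Rdiv. lra. }
  split; [apply (is_lim_seq_ext (fun k => INR k + 1));
    [intro k; symmetry; apply Hdiv, Hgood | apply is_lim_seq_INR_succ]|].
  split; [exists (fun k => / (INR k + 1)); split|].
  { apply is_lim_seq_of_rate with 1. intro k. pose proof (pos_INR k).
    rewrite Rminus_0_r, Rabs_pos_eq by (left; apply Rinv_0_lt_compat; lra). unfold Rdiv. lra. }
  { intros n r Hr. rewrite Hdiv in Hr by apply Hgood. apply Hgood, Hr. }
  split; [apply is_lim_seq_of_rate with 33 | apply is_lim_seq_of_rate with 34]; intro k; apply Hgood.
Qed.
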